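(* Let $\alpha>0$, $\sigma>0$, and let $U,V$ be the continuous linear operators on $\mathcal E^1_{\min}(\mathbb C)$ described in the context. Then, as continuous linear operators on $\mathcal E^1_{\min}(\mathbb C)$, $$U=Z\,E_{-\alpha},\qquad V=E_\alpha,$$ i.e. $(Uf)(z)=zf(z-\alpha)$ and $(Vf)(z)=f(z+\alpha)$ for all $f\in\mathcal E^1_{\min}(\mathbb C)$, $z\in\mathbb C$.
   Context: $\mathcal E^1_{\min}(\mathbb C)$ is the Fréchet space of entire functions $f$ with $\sup_{z\in\mathbb C}|f(z)|e^{-|z|/n}<\infty$ for all $n\in\mathbb N$, topologized by these norms. Let $\pi_{\alpha,\sigma}=\exp(-\sigma/\alpha^2)\sum_{n\ge0}\frac{1}{n!}(\sigma/\alpha^2)^n\delta_{\alpha n}$ on $\alpha\mathbb N_0$ and let $(c_n)_{n\ge0}$ be the monic polynomials orthogonal with respect to it, with generating function $\sum_{n\ge0}\frac{t^n}{n!}c_n(z)=\exp\big(\frac z\alpha\log(1+t\alpha)-\frac{\sigma t}{\alpha}\big)$. Let $\mathcal S$ be the linear bijection of $\mathbb C[z]$ with $\mathcal Sc_n=z^n$. Let $Z$ be multiplication by $z$, $D$ differentiation, and $E_h$ the shift $(E_hf)(z)=f(z+h)$. Define on $\mathbb C[z]$ the operators $\mathcal U=Z+\sigma/\alpha$, $\mathcal V=\alpha D+1$, and $U=\mathcal S^{-1}\mathcal U\mathcal S$, $V=\mathcal S^{-1}\mathcal V\mathcal S$; equivalently $U=\partial^++\sigma/\alpha$ and $V=\alpha\partial^-+1$,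 where $\partial^+c_n=c_{n+1}$ and $\partial^-c_n=nc_{n-1}$. The operators $U$, $V$, $Z$ and $E_h$ ($h\in\mathbb C$) extend uniquely to continuous linear operators on $\mathcal E^1_{\min}(\mathbb C)$, denoted by the same symbols. *)

From Stdlib Require Import Reals.
From Coquelicot Require Import Coquelicot.
Open Scope R_scope.

Fixpoint Csum (a : nat -> C) (N : nat) : C :=
  match N with
  | O => RtoC 0
  | S n => Cplus (Csum a n) (a n)
  end.

Definition entire (f : C -> C) : Prop :=
  forall z : C, ex_derive (K := C_AbsRing) (V := C_NormedModule) f z.

Definition wbound (n : nat) (f : C -> C) (M : R) : Prop :=
  forall z : C, Cmod (f z) * exp (- Cmod z / INR n) <= M.

Definition E1min (f : C -> C) : Prop :=
  entire f /\ forall n : nat, (1 <= n)%nat -> exists M : R, wbound n f M.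

Definition E1min_linear (T : (C -> C) -> (C -> C)) : Prop :=
  (forall f, E1min f -> E1min (T f)) /\
  (forall f g, E1min f -> E1min g ->
     forall z, T (fun w => Cplus (f w) (g w)) z = Cplus (T f z) (T g z)) /\
  (forall (c : C) f, E1min f ->
     forall z, T (fun w => Cmult c (f w)) z = Cmult c (T f z)).

(* continuity w.r.t. the (increasing) family of seminorms
   p_n(f) = sup_z |f(z)| e^{-|z|/n}: for all n there are m and C with
   p_n(T f) <= C p_m(f) for f in E^1_min. *)
Definition E1min_continuous (T : (C -> C) -> (C -> C)) : Prop :=
  forall n : nat, (1 <= n)%nat ->
  exists (m : nat) (K : R), (1 <= m)%nat /\ 0 <= K /\
    forall f, E1min f -> forall M, wbound m f M -> wbound n (T f) (K * M).

Fixpoint falling (a : R) (z : C) (k : nat) : C :=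
  match k with
  | O => RtoC 1
  | S j => Cmult (falling a z j) (Cminus z (RtoC (INR j * a)))
  end.

Fixpoint Cpow (x : C) (k : nat) : C :=
  match k with
  | O => RtoC 1
  | S j => Cmult (Cpow x j) x
  end.

(* Charlier-type polynomials c_n: the coefficient of t^n/n! in
   exp((z/a) log(1 + t a) - s t / a) = (1+ta)^{z/a} e^{-st/a}, i.e.
   c_n(z) = sum_{k=0}^n C(n,k) z(z-a)...(z-(k-1)a) (-s/a)^{n-k}. *)
Definition charlier (a s : R) (n : nat) (z : C) : C :=
  Csum (fun k => Cmult (RtoC (Binomial.C n k))
                   (Cmult (falling a z k) (Cpow (RtoC (- s / a)) (n - k))))
       (S n).

Definition cpoly (a s : R) (co : nat -> C) (N : nat) (z : C) : C :=
  Csum (fun k => Cmult (co k) (charlier a s k z)) N.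

(* U = d^+ + s/a on C[z], where d^+ c_k = c_{k+1} *)
Definition U_poly (a s : R) (co : nat -> C) (N : nat) (z : C) : C :=
  Csum (fun k => Cmult (co k)
          (Cplus (charlier a s (S k) z) (Cmult (RtoC (s / a)) (charlier a s k z)))) N.

(* V = a d^- + 1 on C[z], where d^- c_k = k c_{k-1} (d^- c_0 = 0) *)
Definition V_poly (a s : R) (co : nat -> C) (N : nat) (z : C) : C :=
  Csum (fun k => Cmult (co k)
          (Cplus (Cmult (RtoC (a * INR k)) (charlier a s (Nat.pred k) z))
                 (charlier a s k z))) N.

From Stdlib Require Import Reals Lra Lia.
From Coquelicot Require Import Coquelicot.
Open Scope R_scope.

(** The Charlier recurrences
      [c_(n+1)(z) = z c_n(z - alpha) - (sigma / alpha) c_n(z)] and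
      [c_n(z + alpha) = c_n(z) + alpha n c_(n-1)(z)]
    show that [U] and [V] act on polynomials as [p |-> z p(z - alpha)] and
    [p |-> p(z + alpha)].  Polynomials are dense in [E^1_min]: the Taylor polynomials of [f],
    with coefficients given by Cauchy's formula on a large square (obtained here from
    Goursat's lemma), approximate [f] in every seminorm [sup |f(z)| e^(-|z|/n)], the
    Cauchy estimates controlling the polynomial far out.  Continuity of [U] and [V] carries
    the identities over to all of [E^1_min]. *)

Lemma Csum_ext (a b : nat -> C) N :
  (forall k, (k < N)%nat -> a k = b k) -> Csum a N = Csum b N.
Proof.
  induction N as [|N IH]; intros H; simpl; auto.
  rewrite IH by (intros; apply H; lia). rewrite (H N) by lia. reflexivity.
Qed.

Lemma Csum_plus (a b : nat -> C) N :
  Csum (fun k => Cplus (a k) (b k)) N = Cplus (Csum a N) (Csum b N).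
Proof. induction N as [|N IH]; simpl; [ring|]. rewrite IH. ring. Qed.

Lemma Csum_scal (c : C) (a : nat -> C) N :
  Csum (fun k => Cmult c (a k)) N = Cmult c (Csum a N).
Proof. induction N as [|N IH]; simpl; [ring|]. rewrite IH. ring. Qed.

Lemma Csum_0 N : Csum (fun _ => RtoC 0) N = RtoC 0.
Proof. induction N as [|N IH]; simpl; [ring|]. rewrite IH. ring. Qed.

Lemma Csum_Sl (a : nat -> C) N :
  Csum a (S N) = Cplus (a O) (Csum (fun k => a (S k)) N).
Proof.
  induction N as [|N IH]; [simpl; ring|].
  change (Csum a (S (S N))) with (Cplus (Csum a (S N)) (a (S N))). rewrite IH. simpl. ring.
Qed.

Lemma Csum_pad (a : nat -> C) N m :
  (forall k, (N <= k)%nat -> a k = RtoC 0) -> Csum a (N + m) = Csum a N.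
Proof.
  intros H; induction m as [|m IH]; [now rewrite Nat.add_0_r|].
  rewrite Nat.add_succ_r. simpl. rewrite IH, (H (N + m)%nat) by lia. ring.
Qed.

(** * Charlier polynomials *)

(* [Binomial.C n k] is not zero for [k > n] (truncated subtraction in its definition). *)
Definition binom (n k : nat) : R := if Nat.leb k n then Binomial.C n k else 0.

Lemma binom_0 n : binom n 0 = 1.
Proof. apply C_n_0. Qed.

Lemma binom_pascal n j : binom (S n) (S j) = binom n j + binom n (S j).
Proof.
  unfold binom. change (Nat.leb (S j) (S n)) with (Nat.leb j n).
  destruct (Nat.ltb_spec j n) as [Hjn|Hjn].
  - rewrite (proj2 (Nat.leb_le j n)), (proj2 (Nat.leb_le (S j) n)) by lia.
    symmetry. now apply pascal.
  - destruct (Nat.eqb_spec j n) as [->|Hne].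
    + rewrite Nat.leb_refl, (proj2 (Nat.leb_nle (S n) n)) by lia.
      rewrite !C_n_n. ring.
    + rewrite (proj2 (Nat.leb_nle j n)), (proj2 (Nat.leb_nle (S j) n)) by lia. ring.
Qed.

Lemma binom_S_mul m j : (j <= m)%nat ->
  INR (S j) * Binomial.C (S m) (S j) = INR (S m) * Binomial.C m j.
Proof.
  intros Hj. unfold Binomial.C. simpl (S m - S j)%nat.
  rewrite !fact_simpl, !mult_INR.
  field. repeat split; try apply INR_fact_neq_0; apply not_0_INR; lia.
Qed.

Section Charlier.
Variables (a s : R).

Let w := RtoC (- s / a).

Lemma falling_S_shift z k :
  Cmult z (falling a (Cminus z (RtoC a)) k) = falling a z (S k).
Proof.
  induction k as [|k IH]; [simpl; rewrite Rmult_0_l; ring|].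
  change (falling a z (S (S k))) with
    (Cmult (falling a z (S k)) (Cminus z (RtoC (INR (S k) * a)))).
  rewrite <- IH. simpl falling. rewrite S_INR, !RtoC_mult, RtoC_plus. ring.
Qed.

Lemma falling_S_translate z k :
  falling a (Cplus z (RtoC a)) (S k) =
  Cplus (falling a z (S k)) (Cmult (RtoC (INR (S k) * a)) (falling a z k)).
Proof.
  rewrite <- falling_S_shift.
  replace (Cminus (Cplus z a) a) with z by ring.
  simpl falling. rewrite S_INR, !RtoC_mult, RtoC_plus. ring.
Qed.

Lemma charlier_binom n z L : (S n <= L)%nat ->
  charlier a s n z =
  Csum (fun k => Cmult (RtoC (binom n k)) (Cmult (falling a z k) (Cpow w (n - k)))) L.
Proof.
  intros HL. unfold charlier.
  replace L with (S n + (L - S n))%nat by lia.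
  rewrite Csum_pad.
  - apply Csum_ext. intros k Hk. unfold binom.
    now rewrite (proj2 (Nat.leb_le k n)) by lia.
  - intros k Hk. unfold binom. rewrite (proj2 (Nat.leb_nle k n)) by lia. ring.
Qed.

Lemma charlier_S n z :
  charlier a s (S n) z =
  Cplus (Cmult z (charlier a s n (Cminus z (RtoC a)))) (Cmult w (charlier a s n z)).
Proof.
  rewrite (charlier_binom (S n) z (S (S n))), (charlier_binom n (Cminus z a) (S n)),
    (charlier_binom n z (S (S n))) by lia.
  rewrite Csum_Sl, (Csum_Sl _ (S n)).
  assert (Hsplit : Csum (fun k => Cmult (RtoC (binom (S n) (S k)))
                 (Cmult (falling a z (S k)) (Cpow w (S n - S k)))) (S n) =
     Cplus (Csum (fun k => Cmult z (Cmult (RtoC (binom n k))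
                 (Cmult (falling a (Cminus z a) k) (Cpow w (n - k))))) (S n))
           (Csum (fun k => Cmult w (Cmult (RtoC (binom n (S k)))
                 (Cmult (falling a z (S k)) (Cpow w (n - S k))))) (S n))).
  { rewrite <- Csum_plus. apply Csum_ext. intros j Hj.
    rewrite binom_pascal, RtoC_plus, <- falling_S_shift. simpl (S n - S j)%nat.
    destruct (Nat.leb_spec (S j) n).
    - replace (n - j)%nat with (S (n - S j)) by lia. simpl Cpow. ring.
    - unfold binom at 2 4. rewrite (proj2 (Nat.leb_nle (S j) n)) by lia. ring. }
  rewrite Hsplit, !Csum_scal, !binom_0, !Nat.sub_0_r.
  change (Cpow w (S n)) with (Cmult (Cpow w n) w).
  simpl falling. ring.
Qed.

Lemma charlier_translate n z :
  charlier a s n (Cplus z (RtoC a)) =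
  Cplus (charlier a s n z) (Cmult (RtoC (a * INR n)) (charlier a s (Nat.pred n) z)).
Proof.
  destruct n as [|m]; [unfold charlier; simpl; rewrite Rmult_0_r; ring|].
  unfold charlier at 1 2. rewrite !(Csum_Sl _ (S m)).
  simpl falling at 1 3. simpl Nat.pred.
  rewrite <- Cplus_assoc. f_equal.
  unfold charlier. rewrite <- Csum_scal, <- Csum_plus. apply Csum_ext.
  intros j Hj. simpl (S m - S j)%nat. rewrite falling_S_translate.
  assert (E : Cmult (RtoC (a * INR (S m))) (RtoC (Binomial.C m j)) =
              Cmult (RtoC (Binomial.C (S m) (S j))) (RtoC (INR (S j) * a))).
  { rewrite <- !RtoC_mult. f_equal.
    rewrite Rmult_assoc, <- binom_S_mul by lia. ring. }
  transitivity (Cplus (Cmult (RtoC (Binomial.C (S m) (S j)))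
                        (Cmult (falling a z (S j)) (Cpow w (m - j))))
          (Cmult (Cmult (RtoC (a * INR (S m))) (RtoC (Binomial.C m j)))
                  (Cmult (falling a z j) (Cpow w (m - j))))).
  - rewrite E. unfold w. ring.
  - unfold w. ring.
Qed.

Lemma Z_charlier n z :
  Cmult z (charlier a s n z) =
  Cplus (Cplus (charlier a s (S n) z)
               (Cmult (Cminus (RtoC (a * INR n)) w) (charlier a s n z)))
        (Copp (Cmult (Cmult w (RtoC (a * INR n))) (charlier a s (Nat.pred n) z))).
Proof.
  assert (HS := charlier_S n (Cplus z a)).
  replace (Cminus (Cplus z a) a) with z in HS by ring.
  rewrite (charlier_translate (S n)), charlier_translate in HS. simpl Nat.pred in HS.
  rewrite S_INR, Rmult_plus_distr_l, Rmult_1_r, RtoC_plus in HS.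
  transitivity (Cminus (Cminus (Cplus (charlier a s (S n) z)
      (Cmult (Cplus (RtoC (a * INR n)) (RtoC a)) (charlier a s n z)))
      (Cmult (RtoC a) (charlier a s n z)))
      (Cmult w (Cplus (charlier a s n z) (Cmult (RtoC (a * INR n)) (charlier a s (Nat.pred n) z))))).
  - rewrite HS. ring.
  - ring.
Qed.

Lemma U_poly_shift co N z :
  U_poly a s co N z = Cmult z (cpoly a s co N (Cminus z (RtoC a))).
Proof.
  unfold U_poly, cpoly. rewrite <- Csum_scal. apply Csum_ext. intros k _.
  rewrite charlier_S. unfold w.
  replace (- s / a)%R with (- (s / a))%R by (unfold Rdiv; ring).
  rewrite RtoC_opp. ring.
Qed.

Lemma V_poly_translate co N z :
  V_poly a s co N z = cpoly a s co N (Cplus z (RtoC a)).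
Proof.
  unfold V_poly, cpoly. apply Csum_ext. intros k _.
  rewrite charlier_translate. ring.
Qed.

Definition in_charlier_span (L : nat) (p : C -> C) : Prop :=
  exists co, forall z, p z = cpoly a s co L z.

Lemma in_charlier_span_ext L p q :
  (forall z, p z = q z) -> in_charlier_span L p -> in_charlier_span L q.
Proof. intros E [co H]. exists co. intros z. rewrite <- E. auto. Qed.

Lemma in_charlier_span_S L p : in_charlier_span L p -> in_charlier_span (S L) p.
Proof.
  intros [co H]. exists (fun k => if Nat.eqb k L then RtoC 0 else co k).
  intros z. rewrite H. unfold cpoly. simpl. rewrite Nat.eqb_refl.
  replace (Cmult (RtoC 0) (charlier a s L z)) with (RtoC 0) by ring.
  rewrite Cplus_0_r. apply Csum_ext. intros k Hk.
  now rewrite (proj2 (Nat.eqb_neq k L)) by lia.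
Qed.

Lemma in_charlier_span_le L L' p :
  (L <= L')%nat -> in_charlier_span L p -> in_charlier_span L' p.
Proof. induction 1; auto using in_charlier_span_S. Qed.

Lemma in_charlier_span_0 L : in_charlier_span L (fun _ => RtoC 0).
Proof.
  exists (fun _ => RtoC 0). intros z. unfold cpoly.
  rewrite (Csum_ext _ (fun _ => RtoC 0)), Csum_0; [reflexivity| intros; ring].
Qed.

Lemma in_charlier_span_plus L p q : in_charlier_span L p -> in_charlier_span L q ->
  in_charlier_span L (fun z => Cplus (p z) (q z)).
Proof.
  intros [c1 H1] [c2 H2]. exists (fun k => Cplus (c1 k) (c2 k)).
  intros z. rewrite H1, H2. unfold cpoly. rewrite <- Csum_plus.
  apply Csum_ext. intros; ring.
Qed.

Lemma in_charlier_span_scal L c p : in_charlier_span L p ->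
  in_charlier_span L (fun z => Cmult c (p z)).
Proof.
  intros [c1 H1]. exists (fun k => Cmult c (c1 k)).
  intros z. rewrite H1. unfold cpoly. rewrite <- Csum_scal.
  apply Csum_ext. intros; ring.
Qed.

Lemma in_charlier_span_charlier j L : (j < L)%nat -> in_charlier_span L (charlier a s j).
Proof.
  intros HL. apply (in_charlier_span_le (S j)); [lia|].
  exists (fun k => if Nat.eqb k j then RtoC 1 else RtoC 0).
  intros z. unfold cpoly. simpl. rewrite Nat.eqb_refl.
  rewrite (Csum_ext _ (fun _ => RtoC 0)), Csum_0; [ring|].
  intros k Hk. rewrite (proj2 (Nat.eqb_neq k j)) by lia. ring.
Qed.

Lemma in_charlier_span_Z L p : in_charlier_span L p ->
  in_charlier_span (S L) (fun z => Cmult z (p z)).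
Proof.
  intros [co Hp]. apply (in_charlier_span_ext _ (fun z => Cmult z (cpoly a s co L z))).
  { intros z. now rewrite Hp. }
  clear p Hp. induction L as [|L IH].
  - apply (in_charlier_span_ext _ (fun _ => RtoC 0)), in_charlier_span_0.
    intros z. unfold cpoly. simpl. ring.
  - apply (in_charlier_span_ext _ (fun z => Cplus (Cmult z (cpoly a s co L z))
                               (Cmult (co L) (Cmult z (charlier a s L z))))).
    { intros z. unfold cpoly. simpl. ring. }
    apply in_charlier_span_plus; [now apply in_charlier_span_S|].
    apply in_charlier_span_scal.
    apply (in_charlier_span_ext _ _ _ (fun z => eq_sym (Z_charlier L z))).
    apply in_charlier_span_plus; [apply in_charlier_span_plus|].
    + apply in_charlier_span_charlier; lia.
    + apply in_charlier_span_scal, in_charlier_span_charlier; lia.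
    + apply (in_charlier_span_ext _ (fun z => Cmult (Copp (Cmult w (RtoC (a * INR L))))
                                    (charlier a s (Nat.pred L) z))); [intros; ring|].
      apply in_charlier_span_scal, in_charlier_span_charlier; lia.
Qed.

End Charlier.

Definition mono_poly (b : nat -> C) (N : nat) (z : C) : C :=
  Csum (fun k => Cmult (b k) (Cpow z k)) N.

Lemma in_charlier_span_mono_poly a s b N : in_charlier_span a s N (mono_poly b N).
Proof.
  assert (Hpow : forall k, in_charlier_span a s (S k) (fun z => Cpow z k)).
  { induction k as [|k IH].
    - apply (in_charlier_span_ext _ _ _ (charlier a s 0)).
      + intros z. unfold charlier. simpl. rewrite C_n_0. ring.
      + apply in_charlier_span_charlier; lia.
    - apply (in_charlier_span_ext _ _ _ (fun z => Cmult z (Cpow z k))).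
      + intros z. simpl. ring.
      + now apply in_charlier_span_Z. }
  induction N as [|N IH]; [apply in_charlier_span_0|].
  apply in_charlier_span_plus; [now apply in_charlier_span_S|].
  apply in_charlier_span_scal, Hpow.
Qed.

(** * Complex continuity and complex derivatives *)

(* Coquelicot equips [C] with the product uniform structure; we use the one given by
   [Cmod], which makes the generic lemmas on absolute-value rings available. *)
Local Notation CU := (AbsRing_UniformSpace C_AbsRing).

Definition ccontinuous (g : C -> C) (x : C) : Prop := @continuous CU CU g x.

Definition is_cderive (g : C -> C) (x l : C) : Prop :=
  @is_derive C_AbsRing (AbsRing_NormedModule C_AbsRing) g x l.

Lemma is_derive_epsilon {K : AbsRing} {V : NormedModule K} (f : K -> V) x l :
  is_derive f x l <->
  forall eps, 0 < eps -> exists d, 0 < d /\ forall y, abs (minus y x) < d ->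
    norm (minus (minus (f y) (f x)) (scal (minus y x) l)) <= eps * abs (minus y x).
Proof.
  split.
  - intros [_ Hd] eps He.
    destruct (Hd x (fun P HP => HP) (mkposreal eps He)) as [[d Hdp] Hd'].
    exists d. split; auto.
  - intros H. split; [apply is_linear_scal_l|].
    intros y Hy. apply (is_filter_lim_locally_unique (K:=K) (V:=AbsRing_NormedModule K)) in Hy.
    subst y. intros [eps He]. destruct (H eps He) as [d [Hd H']].
    exists (mkposreal d Hd). exact H'.
Qed.

Lemma is_cderive_epsilon g x l :
  is_cderive g x l <->
  forall eps, 0 < eps -> exists d, 0 < d /\ forall u, Cmod (Cminus u x) < d ->
    Cmod (Cminus (Cminus (g u) (g x)) (Cmult l (Cminus u x))) <= eps * Cmod (Cminus u x).
Proof.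
  unfold is_cderive. rewrite is_derive_epsilon.
  change (@scal C_AbsRing (AbsRing_NormedModule C_AbsRing)) with Cmult.
  split; intros H eps He; destruct (H eps He) as [d [Hd H']];
    exists d; split; auto; intros u Hu; rewrite Cmult_comm; exact (H' u Hu).
Qed.

Lemma ccontinuous_epsilon g x :
  ccontinuous g x <->
  forall eps, 0 < eps -> exists d, 0 < d /\ forall u, Cmod (Cminus u x) < d ->
    Cmod (Cminus (g u) (g x)) < eps.
Proof.
  unfold ccontinuous, continuous. rewrite filterlim_locally. split.
  - intros H eps He. destruct (H (mkposreal eps He)) as [[d Hd] H'].
    exists d. split; auto.
  - intros H [eps He]. destruct (H eps He) as [d [Hd H']].
    exists (mkposreal d Hd). exact H'.
Qed.

Lemma entire_is_cderive f : entire f -> forall u, exists l, is_cderive f u l.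
Proof.
  intros H u. destruct (H u) as [l [_ Hl]]. exists l.
  split; [apply is_linear_scal_l| exact Hl].
Qed.

Lemma is_cderive_continuous g x l : is_cderive g x l -> ccontinuous g x.
Proof. intros H. apply (ex_derive_continuous (V := AbsRing_NormedModule C_AbsRing)). now exists l. Qed.

Lemma ccontinuous_const c x : ccontinuous (fun _ => c) x.
Proof. exact (@continuous_const CU CU c x). Qed.

Lemma ccontinuous_plus g h x : ccontinuous g x -> ccontinuous h x ->
  ccontinuous (fun u => Cplus (g u) (h u)) x.
Proof. apply (@continuous_plus CU _ (AbsRing_NormedModule C_AbsRing)). Qed.

Lemma ccontinuous_minus g h x : ccontinuous g x -> ccontinuous h x ->
  ccontinuous (fun u => Cminus (g u) (h u)) x.
Proof. apply (@continuous_minus CU _ (AbsRing_NormedModule C_AbsRing)). Qed.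

Lemma ccontinuous_mult g h x : ccontinuous g x -> ccontinuous h x ->
  ccontinuous (fun u => Cmult (g u) (h u)) x.
Proof. apply (@continuous_mult CU C_AbsRing). Qed.

Lemma ccontinuous_pow g x n : ccontinuous g x -> ccontinuous (fun u => Cpow (g u) n) x.
Proof.
  intros H. induction n as [|n IH]; [apply ccontinuous_const|].
  now apply (ccontinuous_mult (fun u => Cpow (g u) n)).
Qed.

Lemma ccontinuous_Csum (F : nat -> C -> C) N x : (forall k, ccontinuous (F k) x) ->
  ccontinuous (fun u => Csum (fun k => F k u) N) x.
Proof.
  intros H. induction N as [|N IH]; [apply ccontinuous_const|].
  now apply (ccontinuous_plus (fun u => Csum (fun k => F k u) N)).
Qed.

Lemma is_cderive_const c x : is_cderive (fun _ => c) x (RtoC 0).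
Proof. apply (is_derive_const (V := AbsRing_NormedModule C_AbsRing)). Qed.

Lemma is_cderive_id x : is_cderive (fun u => u) x (RtoC 1).
Proof. apply (is_derive_id (K := C_AbsRing)). Qed.

Lemma is_cderive_plus g h x l1 l2 : is_cderive g x l1 -> is_cderive h x l2 ->
  is_cderive (fun u => Cplus (g u) (h u)) x (Cplus l1 l2).
Proof. apply (is_derive_plus (V := AbsRing_NormedModule C_AbsRing)). Qed.

Lemma is_cderive_minus g h x l1 l2 : is_cderive g x l1 -> is_cderive h x l2 ->
  is_cderive (fun u => Cminus (g u) (h u)) x (Cminus l1 l2).
Proof. apply (is_derive_minus (V := AbsRing_NormedModule C_AbsRing)). Qed.

Lemma is_cderive_mult g h x l1 l2 : is_cderive g x l1 -> is_cderive h x l2 ->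
  is_cderive (fun u => Cmult (g u) (h u)) x (Cplus (Cmult l1 (h x)) (Cmult (g x) l2)).
Proof. intros H1 H2. exact (is_derive_mult g h x l1 l2 H1 H2 Cmult_comm). Qed.

Lemma is_cderive_ext g h x l : (forall u, g u = h u) -> is_cderive g x l -> is_cderive h x l.
Proof. apply (is_derive_ext (V := AbsRing_NormedModule C_AbsRing)). Qed.

Lemma is_cderive_eq g x l1 l2 : l1 = l2 -> is_cderive g x l1 -> is_cderive g x l2.
Proof. now intros ->. Qed.

Lemma is_cderive_pow g x l n : is_cderive g x l ->
  is_cderive (fun u => Cpow (g u) (S n)) x (Cmult (RtoC (INR (S n))) (Cmult (Cpow (g x) n) l)).
Proof.
  intros H. induction n as [|n IH].
  - apply (is_cderive_ext g); [intros; simpl; ring|].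
    revert H. apply is_cderive_eq. simpl. ring.
  - generalize (is_cderive_mult _ _ _ _ _ IH H). apply is_cderive_eq.
    rewrite (S_INR (S n)), RtoC_plus. simpl. ring.
Qed.

Lemma Cmod_minus_ge (u z : C) : Cmod u - Cmod z <= Cmod (Cminus u z).
Proof.
  assert (H := Cmod_triangle (Cminus u z) z).
  replace (Cplus (Cminus u z) z) with u in H by ring. lra.
Qed.

Lemma is_cderive_inv_shift z x : x <> z ->
  is_cderive (fun u => Cinv (Cminus u z)) x (Copp (Cinv (Cmult (Cminus x z) (Cminus x z)))).
Proof.
  intros Hxz. apply is_cderive_epsilon. intros eps He.
  assert (Hxz0 := Cminus_eq_contra _ _ Hxz).
  assert (Hr := proj1 (Cmod_gt_0 _) Hxz0).
  set (r := Cmod (Cminus x z)) in *.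
  exists (Rmin (r / 2) (eps * (r * r * r) / 2)). split.
  { apply Rmin_pos; [lra|]. assert (0 < r * r * r) by (repeat apply Rmult_lt_0_compat; auto).
    apply Rdiv_lt_0_compat; [nra| lra]. }
  intros u Hu.
  assert (Hu1 : Cmod (Cminus u x) < r / 2) by (eapply Rlt_le_trans; [apply Hu|apply Rmin_l]).
  assert (Hu2 : Cmod (Cminus u x) < eps * (r * r * r) / 2)
    by (eapply Rlt_le_trans; [apply Hu|apply Rmin_r]).
  assert (Huz : r / 2 <= Cmod (Cminus u z)).
  { generalize (Cmod_minus_ge (Cminus x z) (Cminus x u)).
    replace (Cminus (Cminus x z) (Cminus x u)) with (Cminus u z) by ring.
    replace (Cminus x u) with (Copp (Cminus u x)) by ring. rewrite Cmod_opp. fold r. lra. }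
  assert (Huz0 : Cminus u z <> RtoC 0) by (intros H; rewrite H, Cmod_0 in Huz; lra).
  replace (Cminus (Cminus (Cinv (Cminus u z)) (Cinv (Cminus x z)))
            (Cmult (Copp (Cinv (Cmult (Cminus x z) (Cminus x z)))) (Cminus u x)))
    with (Cmult (Cmult (Cminus u x) (Cminus u x))
                (Cinv (Cmult (Cminus u z) (Cmult (Cminus x z) (Cminus x z))))) by (field; auto).
  rewrite !Cmod_mult, Cmod_inv by (repeat apply Cmult_neq_0; auto).
  rewrite !Cmod_mult. fold r.
  set (m := Cmod (Cminus u x)) in *. assert (Hm : 0 <= m) by apply Cmod_ge_0.
  set (q := Cmod (Cminus u z)) in *.
  assert (Hqrr : 0 < q * (r * r)) by (apply Rmult_lt_0_compat; nra).
  apply (Rmult_le_reg_r (q * (r * r))); auto.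
  rewrite Rmult_assoc, Rinv_l, Rmult_1_r by lra.
  assert (m * m <= m * (eps * (r * r * r) / 2)) by (apply Rmult_le_compat_l; lra).
  assert (eps * (r * r * r) / 2 <= eps * (q * (r * r))) by nra.
  nra.
Qed.

Lemma ccontinuous_inv_shift z x : x <> z -> ccontinuous (fun u => Cinv (Cminus u z)) x.
Proof. intros H. eapply is_cderive_continuous, is_cderive_inv_shift, H. Qed.

Lemma ccontinuous_inv x : x <> RtoC 0 -> ccontinuous Cinv x.
Proof.
  intros H. apply (@continuous_ext CU CU (fun u => Cinv (Cminus u (RtoC 0)))).
  { intros u. f_equal. ring. }
  now apply ccontinuous_inv_shift.
Qed.

Lemma Cminus_hline (t x y : R) : Cminus (t, y) (x, y) = RtoC (t - x).
Proof. unfold Cminus, Cplus, Copp, RtoC. simpl. f_equal; ring. Qed.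

Lemma Cminus_vline (t x y : R) : Cminus (x, t) (x, y) = Cmult Ci (RtoC (t - y)).
Proof. unfold Cminus, Cplus, Copp, RtoC, Cmult, Ci. simpl. f_equal; ring. Qed.

Lemma Cmod_hline (t x y : R) : Cmod (Cminus (t, y) (x, y)) = Rabs (t - x).
Proof. rewrite Cminus_hline. apply Cmod_R. Qed.

Lemma Cmod_vline (t x y : R) : Cmod (Cminus (x, t) (x, y)) = Rabs (t - y).
Proof. rewrite Cminus_vline, Cmod_mult, Cmod_Ci, Cmod_R. ring. Qed.

Lemma C_R_scal (r : R) (v : C) : @scal R_Ring C_R_ModuleSpace r v = Cmult (RtoC r) v.
Proof.
  destruct v as [v1 v2]. unfold scal. simpl. unfold prod_scal, scal. simpl.
  unfold mult. simpl. unfold Cmult, RtoC. simpl. f_equal; ring.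
Qed.

Lemma C_R_norm (v : C) : @norm R_AbsRing C_R_NormedModule v = Cmod v.
Proof.
  unfold norm. simpl. unfold prod_norm, Cmod. simpl. unfold norm. simpl. unfold abs. simpl.
  rewrite !Rmult_1_r, <- !Rabs_mult, !Rabs_pos_eq by apply Rle_0_sqr. reflexivity.
Qed.

Lemma C_R_ball (u v : C) e : Cmod (Cminus u v) < e -> @ball C_R_NormedModule v e u.
Proof.
  intros H. assert (Hmax := Rmax_Cmod (Cminus u v)).
  split; eapply Rle_lt_trans; try apply H; eapply Rle_trans; try apply Hmax;
    [apply Rmax_l | apply Rmax_r].
Qed.

Lemma is_cderive_hline G x y l : is_cderive G (x, y) l ->
  @is_derive R_AbsRing C_R_NormedModule (fun t => G (t, y)) x l.
Proof.
  rewrite is_cderive_epsilon, is_derive_epsilon. intros H eps He.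
  destruct (H eps He) as [d [Hd H']]. exists d. split; auto. intros t Ht.
  change (abs (minus t x)) with (Rabs (t - x)) in *. change (minus t x) with (t - x).
  rewrite C_R_norm, C_R_scal, <- (Cmod_hline t x y), <- (Cminus_hline t x y), Cmult_comm.
  apply H'. now rewrite Cmod_hline.
Qed.

Lemma is_cderive_vline G x y l : is_cderive G (x, y) l ->
  @is_derive R_AbsRing C_R_NormedModule (fun t => G (x, t)) y (Cmult Ci l).
Proof.
  rewrite is_cderive_epsilon, is_derive_epsilon. intros H eps He.
  destruct (H eps He) as [d [Hd H']]. exists d. split; auto. intros t Ht.
  change (abs (minus t y)) with (Rabs (t - y)) in *. change (minus t y) with (t - y).
  rewrite C_R_norm, C_R_scal, <- (Cmod_vline t x y).
  replace (Cmult (RtoC (t - y)) (Cmult Ci l)) with (Cmult l (Cminus (x, t) (x, y)))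
    by (rewrite Cminus_vline; ring).
  apply H'. now rewrite Cmod_vline.
Qed.

Lemma ccontinuous_hline g x y : ccontinuous g (x, y) ->
  @continuous R_UniformSpace C_R_NormedModule (fun t => g (t, y)) x.
Proof.
  rewrite ccontinuous_epsilon. intros H. apply filterlim_locally. intros [eps He].
  destruct (H eps He) as [d [Hd H']]. exists (mkposreal d Hd). intros t Ht.
  apply C_R_ball, H'. now rewrite Cmod_hline.
Qed.

Lemma ccontinuous_vline g x y : ccontinuous g (x, y) ->
  @continuous R_UniformSpace C_R_NormedModule (fun t => g (x, t)) y.
Proof.
  rewrite ccontinuous_epsilon. intros H. apply filterlim_locally. intros [eps He].
  destruct (H eps He) as [d [Hd H']]. exists (mkposreal d Hd). intros t Ht.
  apply C_R_ball, H'. now rewrite Cmod_vline.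
Qed.

Definition cRInt (g : R -> C) (a b : R) : C := @RInt C_R_CompleteNormedModule g a b.
Definition ex_cRInt (g : R -> C) (a b : R) : Prop := @ex_RInt C_R_NormedModule g a b.

Lemma ex_cRInt_hline g a b y : a <= b -> (forall t, a <= t <= b -> ccontinuous g (t, y)) ->
  ex_cRInt (fun t => g (t, y)) a b.
Proof.
  intros Hab H. apply (@ex_RInt_continuous C_R_CompleteNormedModule).
  intros t Ht. rewrite Rmin_left, Rmax_right in Ht by auto. now apply ccontinuous_hline, H.
Qed.

Lemma ex_cRInt_vline g x c d : c <= d -> (forall t, c <= t <= d -> ccontinuous g (x, t)) ->
  ex_cRInt (fun t => g (x, t)) c d.
Proof.
  intros Hcd H. apply (@ex_RInt_continuous C_R_CompleteNormedModule).
  intros t Ht. rewrite Rmin_left, Rmax_right in Ht by auto. now apply ccontinuous_vline, H.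
Qed.

Lemma cRInt_correct g a b : ex_cRInt g a b -> @is_RInt C_R_NormedModule g a b (cRInt g a b).
Proof. exact (@RInt_correct C_R_CompleteNormedModule g a b). Qed.

Lemma cRInt_plus g h a b : ex_cRInt g a b -> ex_cRInt h a b ->
  cRInt (fun t => Cplus (g t) (h t)) a b = Cplus (cRInt g a b) (cRInt h a b).
Proof. exact (@RInt_plus C_R_CompleteNormedModule g h a b). Qed.

Lemma cRInt_minus g h a b : ex_cRInt g a b -> ex_cRInt h a b ->
  cRInt (fun t => Cminus (g t) (h t)) a b = Cminus (cRInt g a b) (cRInt h a b).
Proof. exact (@RInt_minus C_R_CompleteNormedModule g h a b). Qed.

Lemma cRInt_Chasles g a b c : ex_cRInt g a b -> ex_cRInt g b c ->
  Cplus (cRInt g a b) (cRInt g b c) = cRInt g a c.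
Proof. exact (@RInt_Chasles C_R_CompleteNormedModule g a b c). Qed.

Lemma cRInt_ext g h a b :
  (forall t, Rmin a b < t < Rmax a b -> g t = h t) -> cRInt g a b = cRInt h a b.
Proof. exact (@RInt_ext C_R_CompleteNormedModule g h a b). Qed.

Lemma cRInt_norm_le g a b B : a <= b -> ex_cRInt g a b ->
  (forall t, a <= t <= b -> Cmod (g t) <= B) -> Cmod (cRInt g a b) <= (b - a) * B.
Proof.
  intros Hab He H. rewrite <- C_R_norm.
  apply (@norm_RInt_le C_R_NormedModule g (fun _ => B) a b); auto.
  - intros t Ht. rewrite C_R_norm. auto.
  - now apply cRInt_correct.
  - exact (@is_RInt_const R_NormedModule a b B).
Qed.

Lemma is_RInt_cRInt_fst g a b : ex_cRInt g a b ->
  is_RInt (fun t => fst (g t)) a b (fst (cRInt g a b)).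
Proof.
  intros H. apply (@is_RInt_fct_extend_fst R_NormedModule R_NormedModule g a b).
  now apply cRInt_correct.
Qed.

Lemma is_RInt_cRInt_snd g a b : ex_cRInt g a b ->
  is_RInt (fun t => snd (g t)) a b (snd (cRInt g a b)).
Proof.
  intros H. apply (@is_RInt_fct_extend_snd R_NormedModule R_NormedModule g a b).
  now apply cRInt_correct.
Qed.

Lemma cRInt_scal c g a b : ex_cRInt g a b ->
  cRInt (fun t => Cmult c (g t)) a b = Cmult c (cRInt g a b).
Proof.
  intros H. apply (@is_RInt_unique C_R_CompleteNormedModule).
  destruct c as [c1 c2].
  assert (H1 := is_RInt_cRInt_fst g a b H). assert (H2 := is_RInt_cRInt_snd g a b H).
  rewrite (surjective_pairing (cRInt g a b)).
  set (I1 := fst (cRInt g a b)) in *. set (I2 := snd (cRInt g a b)) in *.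
  change (Cmult (c1, c2) (I1, I2)) with ((c1 * I1 - c2 * I2, c1 * I2 + c2 * I1)%R : C).
  apply (@is_RInt_fct_extend_pair R_NormedModule R_NormedModule).
  - apply (is_RInt_ext (fun t => (c1 * fst (g t) - c2 * snd (g t))%R)); [reflexivity|].
    apply (@is_RInt_minus R_NormedModule); now apply (@is_RInt_scal R_NormedModule).
  - apply (is_RInt_ext (fun t => (c1 * snd (g t) + c2 * fst (g t))%R)); [reflexivity|].
    apply (@is_RInt_plus R_NormedModule); now apply (@is_RInt_scal R_NormedModule).
Qed.

Lemma cRInt_hline_derive G g a b y : a <= b ->
  (forall t, a <= t <= b -> is_cderive G (t, y) (g (t, y)) /\ ccontinuous g (t, y)) ->
  cRInt (fun t => g (t, y)) a b = Cminus (G (b, y)) (G (a, y)).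
Proof.
  intros Hab H. apply (@is_RInt_unique C_R_CompleteNormedModule).
  apply (@is_RInt_derive C_R_CompleteNormedModule (fun t => G (t, y)));
    intros t Ht; rewrite Rmin_left, Rmax_right in Ht by auto.
  - now apply is_cderive_hline, H.
  - now apply ccontinuous_hline, H.
Qed.

Lemma cRInt_vline_derive G g x c d : c <= d ->
  (forall t, c <= t <= d -> is_cderive G (x, t) (g (x, t)) /\ ccontinuous g (x, t)) ->
  Cmult Ci (cRInt (fun t => g (x, t)) c d) = Cminus (G (x, d)) (G (x, c)).
Proof.
  intros Hcd H. rewrite <- cRInt_scal by (apply ex_cRInt_vline; auto; apply H).
  apply (@is_RInt_unique C_R_CompleteNormedModule).
  apply (@is_RInt_derive C_R_CompleteNormedModule (fun t => G (x, t)));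
    intros t Ht; rewrite Rmin_left, Rmax_right in Ht by auto.
  - now apply is_cderive_vline, H.
  - apply (ccontinuous_vline (fun u => Cmult Ci (g u))).
    apply ccontinuous_mult; [apply ccontinuous_const| apply H; auto].
Qed.

(* Counterclockwise integral of [g] over the boundary of [[a, b] x [c, d]]. *)
Definition rect_int (g : C -> C) (a b c d : R) : C :=
  Cminus (Cminus (Cplus (cRInt (fun t => g (t, c)) a b) (Cmult Ci (cRInt (fun t => g (b, t)) c d)))
                 (cRInt (fun t => g (t, d)) a b))
         (Cmult Ci (cRInt (fun t => g (a, t)) c d)).

Definition on_rect (P : C -> Prop) (a b c d : R) : Prop :=
  forall x y, a <= x <= b -> c <= y <= d -> P (x, y).

Definition on_boundary (P : C -> Prop) (a b c d : R) : Prop :=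
  (forall x, a <= x <= b -> P (x, c) /\ P (x, d)) /\
  (forall y, c <= y <= d -> P (a, y) /\ P (b, y)).

Lemma on_rect_boundary P a b c d : a <= b -> c <= d ->
  on_rect P a b c d -> on_boundary P a b c d.
Proof. intros Hab Hcd H. split; intros; split; apply H; lra. Qed.

Lemma on_boundary_all (P : C -> Prop) a b c d : (forall u, P u) -> on_boundary P a b c d.
Proof. intros H. split; intros; split; apply H. Qed.

Lemma on_boundary_impl (P Q : C -> Prop) a b c d :
  (forall u, P u -> Q u) -> on_boundary P a b c d -> on_boundary Q a b c d.
Proof. intros H [H1 H2]. split; intros t Ht; split; apply H; apply H1 || apply H2; auto. Qed.

Lemma on_boundary_conj (P Q : C -> Prop) a b c d :
  on_boundary P a b c d -> on_boundary Q a b c d -> on_boundary (fun u => P u /\ Q u) a b c d.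
Proof.
  intros [P1 P2] [Q1 Q2].
  split; intros t Ht; [destruct (P1 t Ht), (Q1 t Ht) | destruct (P2 t Ht), (Q2 t Ht)]; auto.
Qed.

Lemma ex_cRInt_boundary g a b c d : a <= b -> c <= d ->
  on_boundary (ccontinuous g) a b c d ->
  ex_cRInt (fun t => g (t, c)) a b /\ ex_cRInt (fun t => g (t, d)) a b /\
  ex_cRInt (fun t => g (a, t)) c d /\ ex_cRInt (fun t => g (b, t)) c d.
Proof.
  intros Hab Hcd [H1 H2].
  split; [|split; [|split]].
  - apply (ex_cRInt_hline g a b c); auto. intros t Ht. apply (H1 t Ht).
  - apply (ex_cRInt_hline g a b d); auto. intros t Ht. apply (H1 t Ht).
  - apply (ex_cRInt_vline g a c d); auto. intros t Ht. apply (H2 t Ht).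
  - apply (ex_cRInt_vline g b c d); auto. intros t Ht. apply (H2 t Ht).
Qed.

Lemma rect_int_plus g h a b c d : a <= b -> c <= d ->
  on_boundary (ccontinuous g) a b c d -> on_boundary (ccontinuous h) a b c d ->
  rect_int (fun u => Cplus (g u) (h u)) a b c d = Cplus (rect_int g a b c d) (rect_int h a b c d).
Proof.
  intros Hab Hcd Hg Hh. unfold rect_int.
  destruct (ex_cRInt_boundary g a b c d Hab Hcd Hg) as [G1 [G2 [G3 G4]]].
  destruct (ex_cRInt_boundary h a b c d Hab Hcd Hh) as [H1 [H2 [H3 H4]]].
  rewrite !cRInt_plus by assumption. ring.
Qed.

Lemma rect_int_minus g h a b c d : a <= b -> c <= d ->
  on_boundary (ccontinuous g) a b c d -> on_boundary (ccontinuous h) a b c d ->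
  rect_int (fun u => Cminus (g u) (h u)) a b c d = Cminus (rect_int g a b c d) (rect_int h a b c d).
Proof.
  intros Hab Hcd Hg Hh. unfold rect_int.
  destruct (ex_cRInt_boundary g a b c d Hab Hcd Hg) as [G1 [G2 [G3 G4]]].
  destruct (ex_cRInt_boundary h a b c d Hab Hcd Hh) as [H1 [H2 [H3 H4]]].
  rewrite !cRInt_minus by assumption. ring.
Qed.

Lemma rect_int_scal k g a b c d : a <= b -> c <= d ->
  on_boundary (ccontinuous g) a b c d ->
  rect_int (fun u => Cmult k (g u)) a b c d = Cmult k (rect_int g a b c d).
Proof.
  intros Hab Hcd Hg. unfold rect_int.
  destruct (ex_cRInt_boundary g a b c d Hab Hcd Hg) as [G1 [G2 [G3 G4]]].
  rewrite !cRInt_scal by assumption. ring.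
Qed.

Lemma rect_int_ext g h a b c d : a <= b -> c <= d ->
  on_boundary (fun u => g u = h u) a b c d -> rect_int g a b c d = rect_int h a b c d.
Proof.
  intros Hab Hcd [E1 E2]. unfold rect_int.
  rewrite (cRInt_ext (fun t => g (t, c)) (fun t => h (t, c))),
    (cRInt_ext (fun t => g (t, d)) (fun t => h (t, d))),
    (cRInt_ext (fun t => g (a, t)) (fun t => h (a, t))),
    (cRInt_ext (fun t => g (b, t)) (fun t => h (b, t))); try reflexivity;
    rewrite Rmin_left, Rmax_right by auto; intros t Ht;
    first [apply (E1 t) | apply (E2 t)]; lra.
Qed.

Lemma rect_int_derive G g a b c d : a <= b -> c <= d ->
  on_boundary (fun u => is_cderive G u (g u) /\ ccontinuous g u) a b c d ->
  rect_int g a b c d = RtoC 0.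
Proof.
  intros Hab Hcd [H1 H2]. unfold rect_int.
  rewrite !(cRInt_hline_derive G g), !(cRInt_vline_derive G g) by
    (auto; intros t Ht; first [apply (H1 t Ht) | apply (H2 t Ht)]).
  ring.
Qed.

Lemma rect_int_Csum (F : nat -> C -> C) N a b c d : a <= b -> c <= d ->
  (forall k, on_boundary (ccontinuous (F k)) a b c d) ->
  rect_int (fun u => Csum (fun k => F k u) N) a b c d = Csum (fun k => rect_int (F k) a b c d) N.
Proof.
  intros Hab Hcd H. induction N as [|N IH].
  - apply (rect_int_derive (fun _ => RtoC 0)); auto.
    apply on_boundary_all. intros u. split; [apply is_cderive_const| apply ccontinuous_const].
  - simpl. rewrite (rect_int_plus (fun u => Csum (fun k => F k u) N) (F N)), IH; auto.
    apply (on_boundary_impl (fun u => forall k, ccontinuous (F k) u)).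
    { intros u Hu. now apply ccontinuous_Csum. }
    split; intros t Ht; split; intros k.
    + exact (proj1 (proj1 (H k) t Ht)).
    + exact (proj2 (proj1 (H k) t Ht)).
    + exact (proj1 (proj2 (H k) t Ht)).
    + exact (proj2 (proj2 (H k) t Ht)).
Qed.

Lemma rect_int_split_v g a m b c d : a <= m <= b -> c <= d ->
  on_rect (ccontinuous g) a b c d ->
  rect_int g a b c d = Cplus (rect_int g a m c d) (rect_int g m b c d).
Proof.
  intros Hm Hcd H. unfold rect_int.
  assert (E : forall y, c <= y <= d ->
     cRInt (fun t => g (t, y)) a b =
     Cplus (cRInt (fun t => g (t, y)) a m) (cRInt (fun t => g (t, y)) m b)).
  { intros y Hy. symmetry. apply cRInt_Chasles;
      apply ex_cRInt_hline; try lra; intros; apply H; lra. }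
  rewrite (E c), (E d) by lra. ring.
Qed.

Lemma rect_int_split_h g a b c m d : a <= b -> c <= m <= d ->
  on_rect (ccontinuous g) a b c d ->
  rect_int g a b c d = Cplus (rect_int g a b c m) (rect_int g a b m d).
Proof.
  intros Hab Hm H. unfold rect_int.
  assert (E : forall x, a <= x <= b ->
     cRInt (fun t => g (x, t)) c d =
     Cplus (cRInt (fun t => g (x, t)) c m) (cRInt (fun t => g (x, t)) m d)).
  { intros x Hx. symmetry. apply cRInt_Chasles;
      apply ex_cRInt_vline; try lra; intros; apply H; lra. }
  rewrite (E a), (E b) by lra. ring.
Qed.

Lemma rect_int_norm_le g a b c d B : a <= b -> c <= d ->
  on_boundary (ccontinuous g) a b c d -> on_boundary (fun u => Cmod (g u) <= B) a b c d ->
  Cmod (rect_int g a b c d) <= 2 * ((b - a) + (d - c)) * B.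
Proof.
  intros Hab Hcd Hg [B1 B2]. unfold rect_int.
  destruct (ex_cRInt_boundary g a b c d Hab Hcd Hg) as [G1 [G2 [G3 G4]]].
  assert (I1 : Cmod (cRInt (fun t => g (t, c)) a b) <= (b - a) * B)
    by (apply cRInt_norm_le; auto; intros; apply B1; auto).
  assert (I2 : Cmod (cRInt (fun t => g (t, d)) a b) <= (b - a) * B)
    by (apply cRInt_norm_le; auto; intros; apply B1; auto).
  assert (I3 : Cmod (cRInt (fun t => g (a, t)) c d) <= (d - c) * B)
    by (apply cRInt_norm_le; auto; intros; apply B2; auto).
  assert (I4 : Cmod (cRInt (fun t => g (b, t)) c d) <= (d - c) * B)
    by (apply cRInt_norm_le; auto; intros; apply B2; auto).
  unfold Cminus.
  eapply Rle_trans; [apply Cmod_triangle|]. rewrite Cmod_opp, Cmod_mult, Cmod_Ci.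
  eapply Rle_trans; [apply Rplus_le_compat_r, Cmod_triangle|]. rewrite Cmod_opp.
  eapply Rle_trans; [apply Rplus_le_compat_r, Rplus_le_compat_r, Cmod_triangle|].
  rewrite Cmod_mult, Cmod_Ci. lra.
Qed.

(** * Goursat's lemma *)

Lemma C_eq_0_of_small (x : C) K : 0 <= K ->
  (forall eps, 0 < eps -> Cmod x <= K * eps) -> x = RtoC 0.
Proof.
  intros HK H. apply Cmod_eq_0.
  assert (Hx := Cmod_ge_0 x).
  destruct (Req_dec (Cmod x) 0) as [E|Hne]; auto. exfalso.
  set (eps := Cmod x / (2 * (K + 1))).
  assert (He : 0 < eps) by (apply Rdiv_lt_0_compat; lra).
  specialize (H eps He).
  assert (K * eps < Cmod x); [|lra].
  unfold eps. apply (Rmult_lt_reg_r (2 * (K + 1))); [lra|].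
  replace (K * (Cmod x / (2 * (K + 1))) * (2 * (K + 1))) with (K * Cmod x) by (field; lra).
  nra.
Qed.

Lemma Cmod_le_abs_fst_snd (x : C) : Cmod x <= Rabs (fst x) + Rabs (snd x).
Proof.
  unfold Cmod. destruct x as [p q]. simpl.
  rewrite <- (sqrt_square (Rabs p + Rabs q)) by (generalize (Rabs_pos p) (Rabs_pos q); lra).
  apply sqrt_le_1_alt.
  assert (p * (p * 1) = Rabs p * Rabs p) by (rewrite <- Rabs_mult, Rabs_pos_eq; nra).
  assert (q * (q * 1) = Rabs q * Rabs q) by (rewrite <- Rabs_mult, Rabs_pos_eq; nra).
  generalize (Rabs_pos p) (Rabs_pos q). nra.
Qed.

Lemma rect_int_affine (v l z0 : C) a b c d : a <= b -> c <= d ->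
  rect_int (fun u => Cplus v (Cmult l (Cminus u z0))) a b c d = RtoC 0.
Proof.
  intros Hab Hcd.
  apply (rect_int_derive (fun u => Cplus (Cmult v u)
          (Cmult (Cmult l (RtoC (/ 2))) (Cmult (Cminus u z0) (Cminus u z0))))); auto.
  apply on_boundary_all. intros u.
  assert (Hlin := is_cderive_minus _ _ u _ _ (is_cderive_id u) (is_cderive_const z0 u)).
  split.
  - generalize (is_cderive_plus _ _ u _ _
      (is_cderive_mult _ _ u _ _ (is_cderive_const v u) (is_cderive_id u))
      (is_cderive_mult _ _ u _ _ (is_cderive_const (Cmult l (RtoC (/ 2))) u)
         (is_cderive_mult _ _ u _ _ Hlin Hlin))).
    apply is_cderive_eq.
    replace (Cmult l (Cminus u z0)) with
      (Cmult (Cmult l (Cmult (RtoC (/ 2)) (Cplus (RtoC 1) (RtoC 1)))) (Cminus u z0)) at 1.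
    + ring.
    + rewrite <- RtoC_plus, <- RtoC_mult, Rinv_l by lra. ring.
  - eapply is_cderive_continuous.
    exact (is_cderive_plus _ _ u _ _ (is_cderive_const v u)
             (is_cderive_mult _ _ u _ _ (is_cderive_const l u) Hlin)).
Qed.

Lemma rect_int_near_derive g z0 l a b c d eps : 0 <= eps ->
  a <= b -> c <= d -> a <= fst z0 <= b -> c <= snd z0 <= d ->
  on_rect (ccontinuous g) a b c d ->
  on_rect (fun u => Cmod (Cminus (Cminus (g u) (g z0)) (Cmult l (Cminus u z0)))
                    <= eps * Cmod (Cminus u z0)) a b c d ->
  Cmod (rect_int g a b c d) <= 2 * eps * ((b - a) + (d - c)) ^ 2.
Proof.
  intros He Hab Hcd Hx Hy Hg Happrox.
  set (A := fun u => Cplus (g z0) (Cmult l (Cminus u z0))).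
  assert (HA : forall u, ccontinuous A u).
  { intros u. eapply is_cderive_continuous.
    exact (is_cderive_plus _ _ u _ _ (is_cderive_const (g z0) u)
            (is_cderive_mult _ _ u _ _ (is_cderive_const l u)
               (is_cderive_minus _ _ u _ _ (is_cderive_id u) (is_cderive_const z0 u)))). }
  assert (Hdiam : on_rect (fun u => Cmod (Cminus u z0) <= (b - a) + (d - c)) a b c d).
  { intros x y Hx' Hy'. eapply Rle_trans; [apply Cmod_le_abs_fst_snd|]. simpl.
    apply Rplus_le_compat; apply Rabs_le; lra. }
  replace (rect_int g a b c d) with (rect_int (fun u => Cminus (g u) (A u)) a b c d).
  2:{ rewrite rect_int_minus; auto.
      - unfold A. rewrite rect_int_affine by auto. ring.
      - now apply on_rect_boundary.
      - now apply on_boundary_all. }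
  replace (2 * eps * ((b - a) + (d - c)) ^ 2)
    with (2 * ((b - a) + (d - c)) * (eps * ((b - a) + (d - c)))) by ring.
  apply rect_int_norm_le; auto; apply on_rect_boundary; auto.
  - intros x y Hx' Hy'. apply ccontinuous_minus; auto.
  - intros x y Hx' Hy'. unfold A.
    replace (Cminus (g (x, y)) (Cplus (g z0) (Cmult l (Cminus (x, y) z0))))
      with (Cminus (Cminus (g (x, y)) (g z0)) (Cmult l (Cminus (x, y) z0))) by ring.
    eapply Rle_trans; [apply Happrox; auto|].
    apply Rmult_le_compat_l; auto.
Qed.

Record rect := Rect { rx0 : R; rx1 : R; ry0 : R; ry1 : R }.

Definition rect_int_r (g : C -> C) (r : rect) : C := rect_int g (rx0 r) (rx1 r) (ry0 r) (ry1 r).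
Definition rect_wf (r : rect) : Prop := rx0 r <= rx1 r /\ ry0 r <= ry1 r.
Definition rect_sub (r' r : rect) : Prop :=
  rx0 r <= rx0 r' /\ rx1 r' <= rx1 r /\ ry0 r <= ry0 r' /\ ry1 r' <= ry1 r.
Definition on_rect_r (P : C -> Prop) (r : rect) : Prop := on_rect P (rx0 r) (rx1 r) (ry0 r) (ry1 r).

Definition quarter (r : rect) (right top : bool) : rect :=
  let xm := (rx0 r + rx1 r) / 2 in
  let ym := (ry0 r + ry1 r) / 2 in
  Rect (if right then xm else rx0 r) (if right then rx1 r else xm)
       (if top then ym else ry0 r) (if top then ry1 r else ym).

Lemma rect_sub_refl r : rect_sub r r.
Proof. unfold rect_sub; lra. Qed.

Lemma rect_sub_trans r1 r2 r3 : rect_sub r1 r2 -> rect_sub r2 r3 -> rect_sub r1 r3.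
Proof. unfold rect_sub; lra. Qed.

Lemma on_rect_r_sub P r r' : rect_sub r' r -> on_rect_r P r -> on_rect_r P r'.
Proof. intros Hs H x y Hx Hy. apply H; unfold rect_sub in Hs; lra. Qed.

Lemma quarter_spec r right top : rect_wf r ->
  rect_wf (quarter r right top) /\ rect_sub (quarter r right top) r /\
  rx1 (quarter r right top) - rx0 (quarter r right top) = (rx1 r - rx0 r) / 2 /\
  ry1 (quarter r right top) - ry0 (quarter r right top) = (ry1 r - ry0 r) / 2.
Proof.
  unfold rect_wf, rect_sub. intros Hr.
  destruct right, top; simpl; lra.
Qed.

Lemma rect_int_quarters g r : rect_wf r -> on_rect_r (ccontinuous g) r ->
  rect_int_r g r =
  Cplus (Cplus (rect_int_r g (quarter r false false)) (rect_int_r g (quarter r true false)))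
        (Cplus (rect_int_r g (quarter r false true)) (rect_int_r g (quarter r true true))).
Proof.
  destruct r as [a b c d]. unfold rect_wf, on_rect_r, rect_int_r, quarter. simpl.
  intros [Hab Hcd] H.
  rewrite (rect_int_split_v g a ((a + b) / 2) b c d) by (auto; lra).
  rewrite (rect_int_split_h g a ((a + b) / 2) c ((c + d) / 2) d),
    (rect_int_split_h g ((a + b) / 2) b c ((c + d) / 2) d)
    by (try lra; intros x y Hx Hy; apply H; lra).
  ring.
Qed.

Definition goursat_step (g : C -> C) (r : rect) : rect :=
  let big q := Rle_dec (Cmod (rect_int_r g r) / 4) (Cmod (rect_int_r g q)) in
  if big (quarter r false false) then quarter r false false else
  if big (quarter r true false) then quarter r true false else
  if big (quarter r false true) then quarter r false true else quarter r true true.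

Lemma goursat_step_spec g r : rect_wf r -> on_rect_r (ccontinuous g) r ->
  Cmod (rect_int_r g r) / 4 <= Cmod (rect_int_r g (goursat_step g r)) /\
  exists right top, goursat_step g r = quarter r right top.
Proof.
  intros Hw H. unfold goursat_step.
  destruct (Rle_dec _ (Cmod (rect_int_r g (quarter r false false)))); [eauto|].
  destruct (Rle_dec _ (Cmod (rect_int_r g (quarter r true false)))); [eauto|].
  destruct (Rle_dec _ (Cmod (rect_int_r g (quarter r false true)))); [eauto|].
  split; [|eauto].
  rewrite (rect_int_quarters g r Hw H) in *.
  set (I1 := rect_int_r g (quarter r false false)) in *.
  set (I2 := rect_int_r g (quarter r true false)) in *.
  set (I3 := rect_int_r g (quarter r false true)) in *.
  set (I4 := rect_int_r g (quarter r true true)) in *.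
  generalize (Cmod_triangle (Cplus I1 I2) (Cplus I3 I4)) (Cmod_triangle I1 I2)
    (Cmod_triangle I3 I4). lra.
Qed.

Definition goursat_seq (g : C -> C) (r : rect) (n : nat) : rect := Nat.iter n (goursat_step g) r.

Lemma goursat_seq_spec g r : rect_wf r -> on_rect_r (ccontinuous g) r -> forall n,
  rect_wf (goursat_seq g r n) /\
  (forall k, (k <= n)%nat -> rect_sub (goursat_seq g r n) (goursat_seq g r k)) /\
  Cmod (rect_int_r g r) * (/ 4) ^ n <= Cmod (rect_int_r g (goursat_seq g r n)) /\
  rx1 (goursat_seq g r n) - rx0 (goursat_seq g r n) = (rx1 r - rx0 r) * (/ 2) ^ n /\
  ry1 (goursat_seq g r n) - ry0 (goursat_seq g r n) = (ry1 r - ry0 r) * (/ 2) ^ n.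
Proof.
  intros Hw H n. induction n as [|n [IHw [IHsub [IHint [IHx IHy]]]]].
  - simpl. split; [exact Hw|]. split; [|lra].
    intros k Hk. replace k with 0%nat by lia. apply rect_sub_refl.
  - change (goursat_seq g r (S n)) with (goursat_step g (goursat_seq g r n)).
    assert (Hn : on_rect_r (ccontinuous g) (goursat_seq g r n))
      by (apply (on_rect_r_sub _ r); auto; apply (IHsub 0%nat); lia).
    destruct (goursat_step_spec g _ IHw Hn) as [Hbig [right [top Hq]]]. rewrite Hq in *.
    destruct (quarter_spec (goursat_seq g r n) right top IHw) as [Qw [Qsub [Qx Qy]]].
    simpl pow. split; [exact Qw|]. split; [|split; [|split]].
    + intros k Hk. destruct (Nat.eq_dec k (S n)) as [->|Hne].
      { change (goursat_seq g r (S n)) with (goursat_step g (goursat_seq g r n)).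
        rewrite Hq. apply rect_sub_refl. }
      apply (rect_sub_trans _ _ _ Qsub), IHsub. lia.
    + assert (0 <= (/ 4) ^ n) by (apply pow_le; lra). nra.
    + rewrite Qx, IHx. field.
    + rewrite Qy, IHy. field.
Qed.

Lemma nested_intervals (A B : nat -> R) :
  (forall n, A n <= B n) -> (forall n k, (n <= k)%nat -> A n <= A k /\ B k <= B n) ->
  exists x, forall n, A n <= x <= B n.
Proof.
  intros HAB Hmon.
  set (E := fun x => exists n, x = A n).
  assert (Hb : bound E).
  { exists (B 0%nat). intros x [n ->]. eapply Rle_trans; [apply HAB|]. apply Hmon; lia. }
  destruct (completeness E Hb (ex_intro _ (A 0%nat) (ex_intro _ 0%nat eq_refl))) as [x [Hub Hlub]].
  exists x. intros n. split; [apply Hub; now exists n|].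
  apply Hlub. intros y [k ->].
  destruct (Nat.le_ge_cases n k).
  - eapply Rle_trans; [apply HAB|]. apply Hmon; auto.
  - eapply Rle_trans; [apply Hmon; eauto|]. apply HAB.
Qed.

Lemma goursat_limit_point g r : rect_wf r -> on_rect_r (ccontinuous g) r ->
  exists z0, forall n, rx0 (goursat_seq g r n) <= fst z0 <= rx1 (goursat_seq g r n) /\
                  ry0 (goursat_seq g r n) <= snd z0 <= ry1 (goursat_seq g r n).
Proof.
  intros Hw H. assert (S := goursat_seq_spec g r Hw H).
  destruct (nested_intervals (fun n => rx0 (goursat_seq g r n)) (fun n => rx1 (goursat_seq g r n)))
    as [x0 Hx0]; [intros n; apply S| intros n k Hnk; destruct (S k) as [_ [Hsub _]];
      destruct (Hsub n Hnk) as [? [? _]]; auto|].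
  destruct (nested_intervals (fun n => ry0 (goursat_seq g r n)) (fun n => ry1 (goursat_seq g r n)))
    as [y0 Hy0]; [intros n; apply S| intros n k Hnk; destruct (S k) as [_ [Hsub _]];
      destruct (Hsub n Hnk) as [_ [_ [? ?]]]; auto|].
  exists (x0, y0). auto.
Qed.

(* Quadrisection: the nested rectangles shrink to a point where [g] is close to affine,
   while their boundary integrals decay no faster than the area. *)
Theorem goursat g a b c d : a <= b -> c <= d ->
  on_rect (fun u => exists l, is_cderive g u l) a b c d -> rect_int g a b c d = RtoC 0.
Proof.
  intros Hab Hcd Hd.
  set (r := Rect a b c d).
  assert (Hw : rect_wf r) by (unfold rect_wf; simpl; lra).
  assert (Hc : on_rect_r (ccontinuous g) r).
  { intros x y Hx Hy. destruct (Hd x y Hx Hy) as [l Hl]. eapply is_cderive_continuous, Hl. }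
  assert (S := goursat_seq_spec g r Hw Hc).
  destruct (goursat_limit_point g r Hw Hc) as [[x0 y0] Hz0]. set (z0 := (x0, y0)) in *.
  destruct (Hz0 0%nat) as [Hx0 Hy0]. simpl in Hx0, Hy0.
  destruct (Hd x0 y0 Hx0 Hy0) as [l Hl].
  set (w := (b - a) + (d - c)).
  apply (C_eq_0_of_small _ (2 * w ^ 2)); [unfold w; nra|].
  intros eps He. destruct (proj1 (is_cderive_epsilon g z0 l) Hl eps He) as [del [Hdel Hnear]].
  destruct (pow_lt_1_zero (/ 2) ltac:(rewrite Rabs_pos_eq; lra) (del / (w + 1)))
    as [N HN]; [apply Rdiv_lt_0_compat; unfold w; lra|].
  specialize (HN N (le_n N)). rewrite Rabs_pos_eq in HN by (apply pow_le; lra).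
  set (p := (/ 2) ^ N) in *. assert (Hp : 0 < p) by (apply pow_lt; lra).
  assert (Hsmall : w * p < del).
  { apply (Rmult_lt_compat_l (w + 1)) in HN; [|unfold w; lra].
    replace ((w + 1) * (del / (w + 1))) with del in HN by (field; unfold w; lra). nra. }
  destruct (S N) as [HwN [HsubN [Hint [Hx Hy]]]]. fold p in Hint, Hx, Hy. simpl in Hx, Hy.
  set (rN := goursat_seq g r N) in *.
  destruct (Hz0 N) as [HxN HyN]. fold rN in HxN, HyN.
  assert (HcN : on_rect_r (ccontinuous g) rN) by (apply (on_rect_r_sub _ r); [apply (HsubN 0%nat); lia| exact Hc]).
  assert (Hnear' : on_rect (fun u => Cmod (Cminus (Cminus (g u) (g z0)) (Cmult l (Cminus u z0)))
                    <= eps * Cmod (Cminus u z0)) (rx0 rN) (rx1 rN) (ry0 rN) (ry1 rN)).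
  { intros x y Hx' Hy'. apply Hnear. eapply Rle_lt_trans; [|exact Hsmall].
    eapply Rle_trans; [apply Cmod_le_abs_fst_snd|]. simpl.
    unfold w. rewrite Rmult_plus_distr_r, <- Hx, <- Hy.
    simpl in HxN, HyN. apply Rplus_le_compat; apply Rabs_le; lra. }
  assert (Hbound := rect_int_near_derive g z0 l (rx0 rN) (rx1 rN) (ry0 rN) (ry1 rN) eps
    ltac:(lra) (proj1 HwN) (proj2 HwN) HxN HyN HcN Hnear').
  rewrite Hx, Hy in Hbound. simpl in Hbound, Hint.
  replace (/ 4) with (/ 2 * / 2) in Hint by field. rewrite Rpow_mult_distr in Hint. fold p in Hint.
  unfold rect_int_r in Hint. simpl in Hint.
  apply (Rmult_le_reg_r (p * p)); [nra|].
  eapply Rle_trans; [exact Hint|]. eapply Rle_trans; [exact Hbound|].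
  unfold w. right. ring.
Qed.

(** * Cauchy's integral formula on rectangles *)

Lemma rect_int_shrink h a b c d x y del : 0 < del ->
  a <= x - del -> x + del <= b -> c <= y - del -> y + del <= d ->
  (forall u, ccontinuous h u) -> (forall u, u <> (x, y) -> exists l, is_cderive h u l) ->
  rect_int h a b c d = rect_int h (x - del) (x + del) (y - del) (y + del).
Proof.
  intros Hdel Ha Hb Hc Hd Hcont Hder.
  assert (Hrect : forall a b c d, on_rect (ccontinuous h) a b c d) by (intros ? ? ? ? ? ? _ _; apply Hcont).
  assert (Hoff : forall p q, p <> x \/ q <> y -> exists l, is_cderive h (p, q) l).
  { intros p q Hpq. apply Hder. intros E. injection E. intros. tauto. }
  rewrite (rect_int_split_v h a (x - del) b), (rect_int_split_v h (x - del) (x + del) b),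
    (rect_int_split_h h (x - del) (x + del) c (y - del) d),
    (rect_int_split_h h (x - del) (x + del) (y - del) (y + del) d) by (auto; lra).
  rewrite (goursat h a (x - del) c d), (goursat h (x + del) b c d),
    (goursat h (x - del) (x + del) c (y - del)), (goursat h (x - del) (x + del) (y + del) d)
    by (try lra; intros p q Hp Hq; apply Hoff; lra).
  ring.
Qed.

(* Shrink the rectangle around the bad point; the integral over a square of half side
   [del] is [O(del)] since [h] is bounded near the point. *)
Lemma rect_int_punctured h a b c d x y : a < x < b -> c < y < d ->
  (forall u, ccontinuous h u) -> (forall u, u <> (x, y) -> exists l, is_cderive h u l) ->
  rect_int h a b c d = RtoC 0.
Proof.
  intros Hx Hy Hc Hd.
  destruct (proj1 (ccontinuous_epsilon h (x, y)) (Hc (x, y)) 1 Rlt_0_1) as [d1 [Hd1 Hnear]].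
  set (B := Cmod (h (x, y)) + 1).
  assert (HB : 0 <= B) by (unfold B; generalize (Cmod_ge_0 (h (x, y))); lra).
  apply (C_eq_0_of_small _ (8 * B)); [lra|]. intros eps He.
  set (m := Rmin (Rmin (x - a) (b - x)) (Rmin (y - c) (d - y))).
  assert (Hm : 0 < m) by (unfold m; repeat apply Rmin_pos; lra).
  assert (Hm1 : m <= x - a) by (eapply Rle_trans; [apply Rmin_l| apply Rmin_l]).
  assert (Hm2 : m <= b - x) by (eapply Rle_trans; [apply Rmin_l| apply Rmin_r]).
  assert (Hm3 : m <= y - c) by (eapply Rle_trans; [apply Rmin_r| apply Rmin_l]).
  assert (Hm4 : m <= d - y) by (eapply Rle_trans; [apply Rmin_r| apply Rmin_r]).
  set (del := Rmin (Rmin eps (d1 / 4)) (m / 2)).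
  assert (D0 : 0 < del) by (apply Rmin_pos; [apply Rmin_pos|]; lra).
  assert (D1 : del <= eps) by (eapply Rle_trans; [apply Rmin_l| apply Rmin_l]).
  assert (D2 : del <= d1 / 4) by (eapply Rle_trans; [apply Rmin_l| apply Rmin_r]).
  assert (D3 : del <= m / 2) by apply Rmin_r.
  rewrite (rect_int_shrink h a b c d x y del) by (auto; lra).
  eapply Rle_trans; [apply (rect_int_norm_le _ _ _ _ _ B); try lra|].
  - now apply on_boundary_all.
  - apply on_rect_boundary; try lra. intros p q Hp Hq.
    assert (Hpq : Cmod (Cminus (p, q) (x, y)) < d1).
    { eapply Rle_lt_trans; [apply Cmod_le_abs_fst_snd|]. simpl.
      assert (Rabs (p + - x) <= del) by (apply Rabs_le; lra).
      assert (Rabs (q + - y) <= del) by (apply Rabs_le; lra). lra. }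
    specialize (Hnear _ Hpq).
    replace (h (p, q)) with (Cplus (Cminus (h (p, q)) (h (x, y))) (h (x, y))) by ring.
    eapply Rle_trans; [apply Cmod_triangle|]. unfold B. lra.
  - replace (x + del - (x - del) + (y + del - (y - del))) with (4 * del) by ring.
    assert (del * B <= eps * B) by (apply Rmult_le_compat_r; lra). lra.
Qed.

Definition diff_quot (f : C -> C) (z l : C) (u : C) : C :=
  if Ceq_dec u z then l else Cmult (Cminus (f u) (f z)) (Cinv (Cminus u z)).

Lemma diff_quot_is_cderive f z l u : u <> z -> (exists lu, is_cderive f u lu) ->
  exists l', is_cderive (diff_quot f z l) u l'.
Proof.
  intros Hu [lu Hlu]. eexists.
  apply (is_derive_ext_loc (V := AbsRing_NormedModule C_AbsRing)
           (fun v => Cmult (Cminus (f v) (f z)) (Cinv (Cminus v z)))).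
  - exists (mkposreal _ (proj1 (Cmod_gt_0 _) (Cminus_eq_contra _ _ Hu))). intros v Hv.
    unfold diff_quot. destruct (Ceq_dec v z) as [->|]; auto. exfalso.
    change (Cmod (Cminus z u) < Cmod (Cminus u z)) in Hv.
    replace (Cminus z u) with (Copp (Cminus u z)) in Hv by ring. rewrite Cmod_opp in Hv. lra.
  - exact (is_cderive_mult _ _ u _ _ (is_cderive_minus _ _ u _ _ Hlu (is_cderive_const (f z) u))
             (is_cderive_inv_shift z u Hu)).
Qed.

Lemma diff_quot_continuous f z l : is_cderive f z l -> ccontinuous (diff_quot f z l) z.
Proof.
  intros Hl. apply ccontinuous_epsilon. intros eps He.
  destruct (proj1 (is_cderive_epsilon f z l) Hl (eps / 2)) as [d0 [Hd0 Hnear]]; [lra|].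
  exists d0. split; auto. intros v Hv. unfold diff_quot.
  destruct (Ceq_dec v z) as [->|Hvz]; destruct (Ceq_dec z z) as [_|]; try congruence.
  - replace (Cminus l l) with (RtoC 0) by ring. rewrite Cmod_0. auto.
  - assert (Hvz0 := Cminus_eq_contra _ _ Hvz). assert (Hp := proj1 (Cmod_gt_0 _) Hvz0).
    replace (Cminus (Cmult (Cminus (f v) (f z)) (Cinv (Cminus v z))) l) with
      (Cmult (Cminus (Cminus (f v) (f z)) (Cmult l (Cminus v z))) (Cinv (Cminus v z)))
      by (field; auto).
    rewrite Cmod_mult, Cmod_inv by auto.
    apply (Rmult_lt_reg_r (Cmod (Cminus v z))); auto.
    rewrite Rmult_assoc, Rinv_l, Rmult_1_r by lra.
    specialize (Hnear v Hv). nra.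
Qed.

(* [f(u) / (u - z) = f(z) / (u - z) + diff_quot f z l u], and the boundary integral of the
   difference quotient vanishes. *)
Lemma cauchy_rect f a b c d z : a < fst z < b -> c < snd z < d ->
  (forall u, exists l, is_cderive f u l) ->
  rect_int (fun u => Cmult (f u) (Cinv (Cminus u z))) a b c d =
  Cmult (f z) (rect_int (fun u => Cinv (Cminus u z)) a b c d).
Proof.
  intros Hx Hy Hf. destruct (Hf z) as [lz Hlz].
  assert (Hqc : forall u, ccontinuous (diff_quot f z lz) u).
  { intros u. destruct (Ceq_dec u z) as [->|Hu]; [now apply diff_quot_continuous|].
    destruct (diff_quot_is_cderive f z lz u Hu (Hf u)) as [l Hl]. eapply is_cderive_continuous, Hl. }
  assert (Hq0 : rect_int (diff_quot f z lz) a b c d = RtoC 0).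
  { destruct z as [x y]. apply (rect_int_punctured _ a b c d x y); auto.
    intros u Hu. exact (diff_quot_is_cderive f _ lz u Hu (Hf u)). }
  assert (Hbd : on_boundary (fun u => u <> z) a b c d).
  { destruct z as [x y]. simpl in Hx, Hy.
    split; intros t Ht; split; intros E; injection E; intros; lra. }
  rewrite (rect_int_ext _ (fun u => Cplus (Cmult (f z) (Cinv (Cminus u z))) (diff_quot f z lz u)));
    [|lra|lra|].
  - rewrite rect_int_plus, rect_int_scal, Hq0; [ring|lra|lra| |lra|lra| |].
    + revert Hbd. apply on_boundary_impl. apply ccontinuous_inv_shift.
    + revert Hbd. apply on_boundary_impl. intros u Hu.
      apply ccontinuous_mult; [apply ccontinuous_const| now apply ccontinuous_inv_shift].
    + now apply on_boundary_all.
  - revert Hbd. apply on_boundary_impl. intros u Hu. unfold diff_quot.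
    destruct (Ceq_dec u z) as [E|_]; [contradiction|].
    assert (Cminus u z <> RtoC 0) by now apply Cminus_eq_contra.
    field. auto.
Qed.

(** * Taylor expansion on squares *)

Notation square_int g s := (rect_int g (- s) s (- s) s).

Lemma square_int_ext f g s : 0 < s -> (forall u, f u = g u) -> square_int f s = square_int g s.
Proof. intros Hs H. apply rect_int_ext; [lra| lra| now apply on_boundary_all]. Qed.

Lemma Cmod_Cpow (x : C) n : Cmod (Cpow x n) = Cmod x ^ n.
Proof. induction n as [|n IH]; simpl; [apply Cmod_1|]. rewrite Cmod_mult, IH. ring. Qed.

Lemma Cpow_mult (x y : C) n : Cpow (Cmult x y) n = Cmult (Cpow x n) (Cpow y n).
Proof. induction n as [|n IH]; simpl; [ring|]. rewrite IH. ring. Qed.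

Lemma square_boundary_Cmod s : 0 < s ->
  on_boundary (fun u => s <= Cmod u /\ Cmod u <= 2 * s) (- s) s (- s) s.
Proof.
  intros Hs.
  assert (Hedge : forall p q, Rabs p <= s -> Rabs q <= s -> Rabs p = s \/ Rabs q = s ->
    s <= Cmod (p, q) /\ Cmod (p, q) <= 2 * s).
  { intros p q Hp Hq Hpq. assert (Hmax := Rmax_Cmod (p, q)). simpl in Hmax. split.
    - destruct Hpq as [<-|<-].
      + eapply Rle_trans; [apply Rmax_l| exact Hmax].
      + eapply Rle_trans; [apply Rmax_r| exact Hmax].
    - eapply Rle_trans; [apply Cmod_le_abs_fst_snd|]. simpl. lra. }
  assert (A1 : Rabs s = s) by (apply Rabs_pos_eq; lra).
  assert (A2 : Rabs (- s) = s) by (rewrite Rabs_Ropp; apply Rabs_pos_eq; lra).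
  split; intros t Ht; (assert (At : Rabs t <= s) by (apply Rabs_le; lra)); split; apply Hedge; auto; lra.
Qed.

Lemma square_boundary_ne s z : 0 < s -> Cmod z < s -> on_boundary (fun u => u <> z) (- s) s (- s) s.
Proof.
  intros Hs Hz. apply (on_boundary_impl (fun u => s <= Cmod u /\ Cmod u <= 2 * s)).
  - intros u [Hu _] ->. lra.
  - apply square_boundary_Cmod. exact Hs.
Qed.

Lemma Cinv_minus_expand (u z : C) N : u <> RtoC 0 -> Cminus u z <> RtoC 0 ->
  Cinv (Cminus u z) =
  Cplus (Csum (fun k => Cmult (Cpow z k) (Cpow (Cinv u) (S k))) N)
        (Cmult (Cpow (Cmult z (Cinv u)) N) (Cinv (Cminus u z))).
Proof.
  intros Hu Huz. induction N as [|N IH]; [simpl; field; auto|].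
  rewrite IH at 1. simpl Csum. rewrite !Cpow_mult. simpl Cpow. field. auto.
Qed.

Lemma square_boundary_bounds s u z : 0 < s -> s <= Cmod u -> Cmod z <= s / 4 ->
  (forall N, Cmod (Cpow (Cmult z (Cinv u)) N) <= (/ 4) ^ N) /\
  Cmod (Cinv (Cminus u z)) <= 4 / (3 * s) /\
  (forall n, Cmod (Cpow (Cinv u) n) <= (/ s) ^ n).
Proof.
  intros Hs Hu Hz.
  assert (Hu0 : u <> RtoC 0) by (intros ->; rewrite Cmod_0 in Hu; lra).
  split; [|split].
  - intros N. rewrite Cmod_Cpow. apply pow_incr. split; [apply Cmod_ge_0|].
    rewrite Cmod_mult, Cmod_inv by auto.
    apply (Rmult_le_reg_r (Cmod u)); [lra|]. rewrite Rmult_assoc, Rinv_l by lra.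
    generalize (Cmod_ge_0 z). nra.
  - assert (Hg : 3 * s / 4 <= Cmod (Cminus u z)) by (generalize (Cmod_minus_ge u z); lra).
    assert (Huz : Cminus u z <> RtoC 0) by (intros E; rewrite E, Cmod_0 in Hg; lra).
    rewrite Cmod_inv by auto.
    replace (4 / (3 * s)) with (/ (3 * s / 4)) by (field; lra).
    apply Rinv_le_contravar; lra.
  - intros n. rewrite Cmod_Cpow. apply pow_incr. split; [apply Cmod_ge_0|].
    rewrite Cmod_inv by auto. apply Rinv_le_contravar; lra.
Qed.

Lemma square_int_expand g s z N : 0 < s -> Cmod z <= s / 4 ->
  on_boundary (ccontinuous g) (- s) s (- s) s ->
  square_int (fun u => Cmult (g u) (Cinv (Cminus u z))) s =
  Cplus (Csum (fun k => Cmult (Cpow z k) (square_int (fun u => Cmult (g u) (Cpow (Cinv u) (S k))) s)) N)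
        (square_int (fun u => Cmult (Cmult (g u) (Cpow (Cmult z (Cinv u)) N)) (Cinv (Cminus u z))) s).
Proof.
  intros Hs Hz Hg.
  assert (Hgood : on_boundary (fun u => ccontinuous g u /\ u <> RtoC 0 /\ u <> z) (- s) s (- s) s).
  { apply on_boundary_conj; [exact Hg|]. apply on_boundary_conj.
    - apply square_boundary_ne; [lra| rewrite Cmod_0; lra].
    - apply square_boundary_ne; lra. }
  assert (Hterm : forall k, on_boundary (ccontinuous (fun u => Cmult (g u) (Cpow (Cinv u) k)))
                   (- s) s (- s) s).
  { intros k. revert Hgood. apply on_boundary_impl. intros u [Hc [Hu _]].
    apply ccontinuous_mult, ccontinuous_pow, ccontinuous_inv; auto. }
  rewrite (rect_int_ext _ (fun u => Cplus (Csum (fun k => Cmult (Cpow z k)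
          (Cmult (g u) (Cpow (Cinv u) (S k)))) N)
          (Cmult (Cmult (g u) (Cpow (Cmult z (Cinv u)) N)) (Cinv (Cminus u z))))); [|lra|lra|].
  - rewrite rect_int_plus, rect_int_Csum; [|lra|lra| |lra|lra| |].
    + f_equal. apply Csum_ext. intros k _. apply rect_int_scal; [lra|lra|apply Hterm].
    + intros k. revert Hgood. apply on_boundary_impl. intros u [Hc [Hu _]].
      apply ccontinuous_mult; [apply ccontinuous_const|].
      apply ccontinuous_mult, ccontinuous_pow, ccontinuous_inv; auto.
    + revert Hgood. apply on_boundary_impl. intros u [Hc [Hu _]].
      apply ccontinuous_Csum. intros k.
      apply ccontinuous_mult; [apply ccontinuous_const|].
      apply ccontinuous_mult, ccontinuous_pow, ccontinuous_inv; auto.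
    + revert Hgood. apply on_boundary_impl. intros u [Hc [Hu Huz]].
      apply ccontinuous_mult; [apply ccontinuous_mult; auto|].
      * apply ccontinuous_pow, ccontinuous_mult; [apply ccontinuous_const| apply ccontinuous_inv; auto].
      * apply ccontinuous_inv_shift; auto.
  - revert Hgood. apply on_boundary_impl. intros u [_ [Hu Huz]].
    rewrite (Cinv_minus_expand u z N) at 1 by (auto; now apply Cminus_eq_contra).
    rewrite Cmult_plus_distr_l, <- Csum_scal. f_equal; [apply Csum_ext; intros; ring| ring].
Qed.

Lemma square_int_inv_pow s k : 0 < s -> square_int (fun u => Cpow (Cinv u) (S (S k))) s = RtoC 0.
Proof.
  intros Hs.
  assert (Hk : RtoC (INR (S k)) <> RtoC 0) by (intros E; injection E; apply (not_0_INR (S k)); lia).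
  apply (rect_int_derive (fun u => Cmult (Cinv (RtoC (- INR (S k)))) (Cpow (Cinv u) (S k))));
    [lra|lra|].
  apply (on_boundary_impl (fun u => s <= Cmod u /\ Cmod u <= 2 * s)); [|now apply square_boundary_Cmod].
  intros u [Hu _]. assert (Hu0 : u <> RtoC 0) by (intros ->; rewrite Cmod_0 in Hu; lra).
  split.
  - assert (Hinv : is_cderive Cinv u (Copp (Cinv (Cmult u u)))).
    { generalize (is_cderive_inv_shift (RtoC 0) u Hu0).
      replace (Cminus u (RtoC 0)) with u by ring.
      apply is_cderive_ext. intros v. f_equal. ring. }
    generalize (is_cderive_mult _ _ u _ _ (is_cderive_const (Cinv (RtoC (- INR (S k)))) u)
                  (is_cderive_pow _ _ _ k Hinv)).
    apply is_cderive_eq. rewrite RtoC_opp.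
    change (Cpow (Cinv u) (S (S k))) with (Cmult (Cmult (Cpow (Cinv u) k) (Cinv u)) (Cinv u)).
    field. split; auto.
  - apply ccontinuous_pow, ccontinuous_inv, Hu0.
Qed.

Lemma square_int_remainder_le g s z N K : 0 < s -> Cmod z <= s / 4 ->
  on_boundary (ccontinuous g) (- s) s (- s) s ->
  on_boundary (fun u => Cmod (g u) <= K) (- s) s (- s) s ->
  Cmod (square_int (fun u => Cmult (Cmult (g u) (Cpow (Cmult z (Cinv u)) N)) (Cinv (Cminus u z))) s)
  <= 32 / 3 * K * (/ 4) ^ N.
Proof.
  intros Hs Hz Hc Hb.
  replace (32 / 3 * K * (/ 4) ^ N) with
    (2 * ((s - - s) + (s - - s)) * (K * ((/ 4) ^ N * (4 / (3 * s))))) by (field; lra).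
  apply rect_int_norm_le; [lra|lra| |].
  - apply (on_boundary_impl (fun u => ccontinuous g u /\ (s <= Cmod u /\ Cmod u <= 2 * s)));
      [|apply on_boundary_conj; auto; now apply square_boundary_Cmod].
    intros u [Hgu [Hu _]].
    assert (Hu0 : u <> RtoC 0) by (intros ->; rewrite Cmod_0 in Hu; lra).
    assert (Huz : u <> z) by (intros ->; lra).
    apply ccontinuous_mult; [apply ccontinuous_mult; auto|].
    + apply ccontinuous_pow, ccontinuous_mult; [apply ccontinuous_const| now apply ccontinuous_inv].
    + now apply ccontinuous_inv_shift.
  - apply (on_boundary_impl (fun u => Cmod (g u) <= K /\ (s <= Cmod u /\ Cmod u <= 2 * s)));
      [|apply on_boundary_conj; auto; now apply square_boundary_Cmod].
    intros u [Hgu [Hu _]].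
    destruct (square_boundary_bounds s u z Hs Hu Hz) as [B1 [B2 _]].
    rewrite !Cmod_mult, Rmult_assoc.
    apply Rmult_le_compat; try apply Rmult_le_pos; try apply Cmod_ge_0; auto.
    apply Rmult_le_compat; try apply Cmod_ge_0; auto.
Qed.

Lemma square_int_coef_le g s k K : 0 < s ->
  on_boundary (ccontinuous g) (- s) s (- s) s ->
  on_boundary (fun u => Cmod (g u) <= K) (- s) s (- s) s ->
  Cmod (square_int (fun u => Cmult (g u) (Cpow (Cinv u) (S k))) s) <= 8 * K * (/ s) ^ k.
Proof.
  intros Hs Hc Hb.
  replace (8 * K * (/ s) ^ k) with (2 * ((s - - s) + (s - - s)) * (K * (/ s) ^ (S k)))
    by (simpl; field; lra).
  apply rect_int_norm_le; [lra|lra| |].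
  - apply (on_boundary_impl (fun u => ccontinuous g u /\ (s <= Cmod u /\ Cmod u <= 2 * s)));
      [|apply on_boundary_conj; auto; now apply square_boundary_Cmod].
    intros u [Hgu [Hu _]].
    assert (Hu0 : u <> RtoC 0) by (intros ->; rewrite Cmod_0 in Hu; lra).
    apply ccontinuous_mult, ccontinuous_pow, ccontinuous_inv; auto.
  - apply (on_boundary_impl (fun u => Cmod (g u) <= K /\ (s <= Cmod u /\ Cmod u <= 2 * s)));
      [|apply on_boundary_conj; auto; now apply square_boundary_Cmod].
    intros u [Hgu [Hu _]].
    destruct (square_boundary_bounds s u (RtoC 0) Hs Hu ltac:(rewrite Cmod_0; lra)) as [_ [_ B3]].
    rewrite Cmod_mult. apply Rmult_le_compat; try apply Cmod_ge_0; auto.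
Qed.

(* Expanding [1 / (u - z)] in powers of [z / u] leaves only the [k = 0] term. *)
Lemma square_int_inv_shift s z : 0 < s -> Cmod z <= s / 4 ->
  square_int (fun u => Cinv (Cminus u z)) s = square_int Cinv s.
Proof.
  intros Hs Hz. apply Ceq_minus, (C_eq_0_of_small _ (32 / 3)); [lra|]. intros eps He.
  destruct (pow_lt_1_zero (/ 4) ltac:(rewrite Rabs_pos_eq; lra) eps He) as [N HN].
  specialize (HN (S N) (le_S _ _ (le_n N))). rewrite Rabs_pos_eq in HN by (apply pow_le; lra).
  assert (Hone : on_boundary (ccontinuous (fun _ => RtoC 1)) (- s) s (- s) s)
    by (apply on_boundary_all; intros; apply ccontinuous_const).
  rewrite (square_int_ext _ (fun u => Cmult (RtoC 1) (Cinv (Cminus u z)))) by (auto; intros; ring).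
  rewrite (square_int_expand _ s z (S N)), Csum_Sl by auto.
  rewrite (Csum_ext _ (fun _ => RtoC 0)), Csum_0.
  2:{ intros k _.
      rewrite (square_int_ext _ (fun u => Cpow (Cinv u) (S (S k)))), square_int_inv_pow
        by (auto; intros; ring).
      ring. }
  rewrite (square_int_ext (fun u => Cmult (RtoC 1) (Cpow (Cinv u) 1)) Cinv) by (auto; intros; simpl; ring).
  replace (Cminus _ (square_int Cinv s)) with
    (square_int (fun u => Cmult (Cmult (RtoC 1) (Cpow (Cmult z (Cinv u)) (S N))) (Cinv (Cminus u z))) s)
    by (simpl; ring).
  eapply Rle_trans; [apply (square_int_remainder_le _ _ _ _ 1); auto|].
  - apply on_boundary_all. intros. rewrite Cmod_1. lra.
  - lra.
Qed.

Lemma Im_rect_int g a b c d : snd (rect_int g a b c d) =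
  snd (cRInt (fun t => g (t, c)) a b) + fst (cRInt (fun t => g (b, t)) c d)
  - snd (cRInt (fun t => g (t, d)) a b) - fst (cRInt (fun t => g (a, t)) c d).
Proof. unfold rect_int, Ci. simpl. ring. Qed.

Lemma is_RInt_ge_const f s I c : 0 < s -> is_RInt f (- s) s I ->
  (forall t, - s < t < s -> c <= f t) -> 2 * s * c <= I.
Proof.
  intros Hs HI H.
  replace (2 * s * c) with (scal (s - - s) c) by (unfold scal; simpl; unfold mult; simpl; ring).
  apply (is_RInt_le (fun _ => c) f (- s) s); auto; [lra| exact (@is_RInt_const R_NormedModule _ _ c)].
Qed.

(* Avoids computing [2 pi i]: each side of the square contributes at least [1] to the
   imaginary part. *)
Lemma square_int_Cinv_ge s : 0 < s -> 4 <= Cmod (square_int Cinv s).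
Proof.
  intros Hs.
  assert (Hkey : forall t, - s < t < s -> / (2 * s) <= s / (t * t + s * s)).
  { intros t Ht. replace (/ (2 * s)) with (s / (2 * (s * s))) by (field; lra).
    apply Rmult_le_compat_l; [lra|]. apply Rinv_le_contravar; nra. }
  assert (Hc : on_boundary (ccontinuous Cinv) (- s) s (- s) s).
  { apply (on_boundary_impl (fun u => s <= Cmod u /\ Cmod u <= 2 * s)); [|now apply square_boundary_Cmod].
    intros u [Hu _]. apply ccontinuous_inv. intros ->. rewrite Cmod_0 in Hu. lra. }
  destruct (ex_cRInt_boundary Cinv (- s) s (- s) s ltac:(lra) ltac:(lra) Hc) as [X1 [X2 [X3 X4]]].
  assert (Hinv : forall p q, Cinv (p, q) = (p / (p * p + q * q), - q / (p * p + q * q))).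
  { intros p q. unfold Cinv. simpl. f_equal; f_equal; ring. }
  assert (R1 : 1 <= snd (cRInt (fun t => Cinv (t, - s)) (- s) s)).
  { replace 1 with (2 * s * / (2 * s)) by (field; lra).
    apply (is_RInt_ge_const (fun t => snd (Cinv (t, - s)))); auto; [apply is_RInt_cRInt_snd, X1|].
    intros t Ht. rewrite Hinv. simpl. replace (- - s / (t * t + - s * - s)) with (s / (t * t + s * s))
      by (field; nra). now apply Hkey. }
  assert (R2 : 1 <= fst (cRInt (fun t => Cinv (s, t)) (- s) s)).
  { replace 1 with (2 * s * / (2 * s)) by (field; lra).
    apply (is_RInt_ge_const (fun t => fst (Cinv (s, t)))); auto; [apply is_RInt_cRInt_fst, X4|].
    intros t Ht. rewrite Hinv. simpl. replace (s / (s * s + t * t)) with (s / (t * t + s * s))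
      by (field; nra). now apply Hkey. }
  assert (R3 : 1 <= - snd (cRInt (fun t => Cinv (t, s)) (- s) s)).
  { replace 1 with (2 * s * / (2 * s)) by (field; lra).
    apply (is_RInt_ge_const (fun t => - snd (Cinv (t, s)))); auto.
    - apply (@is_RInt_opp R_NormedModule), is_RInt_cRInt_snd, X2.
    - intros t Ht. rewrite Hinv. simpl. replace (- (- s / (t * t + s * s))) with (s / (t * t + s * s))
        by (field; nra). now apply Hkey. }
  assert (R4 : 1 <= - fst (cRInt (fun t => Cinv (- s, t)) (- s) s)).
  { replace 1 with (2 * s * / (2 * s)) by (field; lra).
    apply (is_RInt_ge_const (fun t => - fst (Cinv (- s, t)))); auto.
    - apply (@is_RInt_opp R_NormedModule), is_RInt_cRInt_fst, X3.
    - intros t Ht. rewrite Hinv. simpl. replace (- (- s / (- s * - s + t * t))) with (s / (t * t + s * s))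
        by (field; nra). now apply Hkey. }
  assert (Him := Im_rect_int Cinv (- s) s (- s) s).
  assert (Hmax := Rmax_Cmod (square_int Cinv s)).
  assert (Hr := Rmax_r (Rabs (fst (square_int Cinv s))) (Rabs (snd (square_int Cinv s)))).
  assert (Habs := RRle_abs (snd (square_int Cinv s))).
  lra.
Qed.

Lemma taylor_square f s z N : (forall u, exists l, is_cderive f u l) -> 0 < s -> Cmod z <= s / 4 ->
  Cmult (f z) (square_int Cinv s) =
  Cplus (Csum (fun k => Cmult (Cpow z k) (square_int (fun u => Cmult (f u) (Cpow (Cinv u) (S k))) s)) N)
        (square_int (fun u => Cmult (Cmult (f u) (Cpow (Cmult z (Cinv u)) N)) (Cinv (Cminus u z))) s).
Proof.
  intros Hf Hs Hz.
  rewrite <- (square_int_inv_shift s z Hs Hz), <- (square_int_expand f s z N Hs Hz).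
  - symmetry. apply cauchy_rect; auto.
    + assert (Hmax := Rmax_Cmod z). assert (Hl := Rmax_l (Rabs (fst z)) (Rabs (snd z))).
      assert (H : Rabs (fst z) < s) by lra. apply Rabs_def2 in H. lra.
    + assert (Hmax := Rmax_Cmod z). assert (Hr := Rmax_r (Rabs (fst z)) (Rabs (snd z))).
      assert (H : Rabs (snd z) < s) by lra. apply Rabs_def2 in H. lra.
  - apply on_boundary_all. intros u. destruct (Hf u) as [l Hl]. eapply is_cderive_continuous, Hl.
Qed.

(** * Polynomial approximation in the seminorms of [E1min] *)

Lemma exp_le_mono x y : x <= y -> exp x <= exp y.
Proof. intros [H| ->]; [left; now apply exp_increasing| lra]. Qed.

Lemma exp_pow x k : exp x ^ k = exp (INR k * x).
Proof.
  induction k as [|k IH]; [simpl; now rewrite Rmult_0_l, exp_0|].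
  rewrite <- tech_pow_Rmult, IH, <- exp_plus, S_INR. f_equal. ring.
Qed.

Lemma pow_exp_decr (x y n : R) k : 0 < y -> y <= x -> 0 < n -> INR k * n <= y ->
  x ^ k * exp (- x / n) <= y ^ k * exp (- y / n).
Proof.
  intros Hy Hxy Hn Hk.
  assert (E : x ^ k = y ^ k * (x / y) ^ k) by (rewrite <- Rpow_mult_distr; f_equal; field; lra).
  assert (B1 : (x / y) ^ k <= exp (INR k * (x / y - 1))).
  { rewrite <- exp_pow. apply pow_incr. split; [apply Rdiv_le_0_compat; lra|].
    generalize (exp_ineq1_le (x / y - 1)). lra. }
  assert (B2 : INR k * (x / y - 1) <= (x - y) / n).
  { replace (INR k * (x / y - 1)) with ((x - y) * (INR k / y)) by (field; lra).
    unfold Rdiv at 2. apply Rmult_le_compat_l; [lra|].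
    apply (Rmult_le_reg_r (y * n)); [nra|].
    replace (INR k / y * (y * n)) with (INR k * n) by (field; lra).
    replace (/ n * (y * n)) with y by (field; lra). lra. }
  rewrite E, Rmult_assoc. apply Rmult_le_compat_l; [apply pow_le; lra|].
  eapply Rle_trans; [apply Rmult_le_compat_r; [left; apply exp_pos| exact B1]|].
  rewrite <- exp_plus. apply exp_le_mono.
  replace (- y / n) with ((x - y) / n + - x / n) by (field; lra). lra.
Qed.

Lemma Cmod_Csum_geom_le (a : nat -> C) B N : 0 <= B ->
  (forall k, (k < N)%nat -> Cmod (a k) <= B * (/ 4) ^ k) -> Cmod (Csum a N) <= 4 / 3 * B.
Proof.
  intros HB H.
  assert (G : Cmod (Csum a N) <= 4 / 3 * B * (1 - (/ 4) ^ N)).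
  { induction N as [|N IH]; simpl; [rewrite Cmod_0; lra|].
    eapply Rle_trans; [apply Cmod_triangle|].
    assert (IH' := IH (fun k Hk => H k (Nat.lt_lt_succ_r _ _ Hk))).
    assert (HN := H N (Nat.lt_succ_diag_r N)). lra. }
  assert (0 <= (/ 4) ^ N) by (apply pow_le; lra). nra.
Qed.

Lemma E1min_growth f n : E1min f -> (1 <= n)%nat ->
  exists M, 0 <= M /\ forall u, Cmod (f u) <= M * exp (Cmod u / INR n).
Proof.
  intros [_ Hb] Hn. destruct (Hb n Hn) as [M HM]. exists M. split.
  - eapply Rle_trans; [|apply (HM (RtoC 0))].
    apply Rmult_le_pos; [apply Cmod_ge_0| left; apply exp_pos].
  - intros u. specialize (HM u).
    rewrite <- (Rmult_1_r (Cmod (f u))), <- (exp_0), <- (Rplus_opp_l (Cmod u / INR n)), exp_plus.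
    replace (- (Cmod u / INR n)) with (- Cmod u / INR n) by (unfold Rdiv; ring).
    rewrite <- Rmult_assoc. apply Rmult_le_compat_r; [left; apply exp_pos| exact HM].
Qed.

Definition cauchy_coef (f : C -> C) (s : R) (k : nat) : C :=
  Cmult (square_int (fun u => Cmult (f u) (Cpow (Cinv u) (S k))) s) (Cinv (square_int Cinv s)).

Section CauchyCoefficients.
Variables (f : C -> C) (s K : R).
Hypothesis Hf : forall u, exists l, is_cderive f u l.
Hypothesis Hs : 0 < s.
Hypothesis HK : on_boundary (fun u => Cmod (f u) <= K) (- s) s (- s) s.

Let Hfc : on_boundary (ccontinuous f) (- s) s (- s) s.
Proof. apply on_boundary_all. intros u. destruct (Hf u) as [l Hl]. eapply is_cderive_continuous, Hl. Qed.

Let HJ : 4 <= Cmod (square_int Cinv s).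
Proof. now apply square_int_Cinv_ge. Qed.

Let HJ0 : square_int Cinv s <> RtoC 0.
Proof. intros E. rewrite E, Cmod_0 in HJ. lra. Qed.

Lemma cauchy_coef_le k : Cmod (cauchy_coef f s k) <= 2 * K * (/ s) ^ k.
Proof.
  unfold cauchy_coef. rewrite Cmod_mult, Cmod_inv by exact HJ0.
  assert (Hb := square_int_coef_le f s k K Hs Hfc HK).
  assert (/ Cmod (square_int Cinv s) <= / 4) by (apply Rinv_le_contravar; lra).
  assert (0 <= Cmod (square_int (fun u => Cmult (f u) (Cpow (Cinv u) (S k))) s)) by apply Cmod_ge_0.
  nra.
Qed.

Lemma taylor_remainder_le z N : Cmod z <= s / 4 ->
  Cmod (Cminus (f z) (mono_poly (cauchy_coef f s) N z)) <= 8 / 3 * K * (/ 4) ^ N.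
Proof.
  intros Hz. assert (T := taylor_square f s z N Hf Hs Hz).
  set (R := square_int (fun u => Cmult (Cmult (f u) (Cpow (Cmult z (Cinv u)) N)) (Cinv (Cminus u z))) s) in T.
  replace (Cminus (f z) (mono_poly (cauchy_coef f s) N z)) with (Cmult R (Cinv (square_int Cinv s))).
  - rewrite Cmod_mult, Cmod_inv by exact HJ0.
    assert (HR := square_int_remainder_le f s z N K Hs Hz Hfc HK). fold R in HR.
    assert (/ Cmod (square_int Cinv s) <= / 4) by (apply Rinv_le_contravar; lra).
    assert (0 <= Cmod R) by apply Cmod_ge_0. nra.
  - unfold mono_poly, cauchy_coef.
    rewrite (Csum_ext _ (fun k => Cmult (Cinv (square_int Cinv s))
      (Cmult (Cpow z k) (square_int (fun u => Cmult (f u) (Cpow (Cinv u) (S k))) s))))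
      by (intros; ring).
    rewrite Csum_scal.
    replace (f z) with (Cmult (Cmult (f z) (square_int Cinv s)) (Cinv (square_int Cinv s)))
      by (field; exact HJ0).
    rewrite T. ring.
Qed.

Let HK0 : 0 <= K.
Proof.
  destruct HK as [H _]. destruct (H s ltac:(lra)) as [H1 _].
  eapply Rle_trans; [apply Cmod_ge_0| exact H1].
Qed.

Lemma mono_poly_cauchy_coef_le z N nn : 0 < nn -> INR N * nn <= s / 4 -> s / 4 <= Cmod z ->
  Cmod (mono_poly (cauchy_coef f s) N z) * exp (- Cmod z / nn) <= 8 / 3 * K * exp (- (s / 4) / nn).
Proof.
  intros Hnn HN Hz.
  assert (HE := exp_pos (- Cmod z / nn)).
  set (B := 2 * K * exp (- (s / 4) / nn) * / exp (- Cmod z / nn)).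
  assert (HB : 0 <= B).
  { apply Rmult_le_pos; [|left; now apply Rinv_0_lt_compat].
    apply Rmult_le_pos; [generalize HK0; lra| left; apply exp_pos]. }
  apply (Rmult_le_reg_r (/ exp (- Cmod z / nn))); [now apply Rinv_0_lt_compat|].
  rewrite Rmult_assoc, Rinv_r, Rmult_1_r by lra.
  replace (8 / 3 * K * exp (- (s / 4) / nn) * / exp (- Cmod z / nn)) with (4 / 3 * B) by (unfold B; field; lra).
  apply Cmod_Csum_geom_le; auto. intros k Hk.
  rewrite Cmod_mult, Cmod_Cpow.
  assert (Hxk : Cmod z ^ k * exp (- Cmod z / nn) <= (s / 4) ^ k * exp (- (s / 4) / nn)).
  { apply pow_exp_decr; try lra. eapply Rle_trans; [|exact HN].
    apply Rmult_le_compat_r; [lra| apply le_INR; lia]. }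
  assert (Hsk : (/ s) ^ k * (s / 4) ^ k = (/ 4) ^ k) by (rewrite <- Rpow_mult_distr; f_equal; field; lra).
  apply (Rmult_le_reg_r (exp (- Cmod z / nn))); auto.
  unfold B. rewrite Rmult_assoc.
  eapply Rle_trans.
  { apply Rmult_le_compat; [apply Cmod_ge_0| apply Rmult_le_pos; [apply pow_le, Cmod_ge_0| lra]|
      apply cauchy_coef_le| exact Hxk]. }
  replace (2 * K * exp (- (s / 4) / nn) * / exp (- Cmod z / nn) * (/ 4) ^ k * exp (- Cmod z / nn))
    with (2 * K * exp (- (s / 4) / nn) * ((/ 4) ^ k) * (exp (- Cmod z / nn) * / exp (- Cmod z / nn))) by ring.
  rewrite Rinv_r, <- Hsk by lra. right. ring.
Qed.

End CauchyCoefficients.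

Section Approximation.
Variables (f : C -> C) (n N : nat) (M : R).
Hypothesis Hf : forall u, exists l, is_cderive f u l.
Hypothesis Hn : (1 <= n)%nat.
Hypothesis HN : (1 <= N)%nat.
Hypothesis HM0 : 0 <= M.
Hypothesis HM : forall u, Cmod (f u) <= M * exp (Cmod u / INR (16 * n)).

(* Half side of the square: far enough that [exp (- |z| / n)] kills the polynomial
   outside [|z| <= s / 4], while [|f|] stays below [M e^N] on the boundary. *)
Let s := 8 * INR n * INR N.
Let K := M * exp (INR N).

Let Hn0 : 0 < INR n.
Proof. apply lt_0_INR. lia. Qed.

Let Hs : 0 < s.
Proof. unfold s. apply Rmult_lt_0_compat; [lra| apply lt_0_INR; lia]. Qed.

Let H16 : INR (16 * n) = 16 * INR n.
Proof. rewrite mult_INR. simpl. ring. Qed.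

Lemma approx_boundary_le : on_boundary (fun u => Cmod (f u) <= K) (- s) s (- s) s.
Proof.
  apply (on_boundary_impl (fun u => s <= Cmod u /\ Cmod u <= 2 * s)); [|now apply square_boundary_Cmod].
  intros u [_ Hu]. eapply Rle_trans; [apply HM|]. unfold K. apply Rmult_le_compat_l; auto.
  apply exp_le_mono. rewrite H16. apply (Rmult_le_reg_r (16 * INR n)); [lra|].
  unfold Rdiv. rewrite Rmult_assoc, Rinv_l by lra. unfold s in Hu. nra.
Qed.

Lemma approx_inner_le z : Cmod z <= s / 4 ->
  Cmod (Cminus (f z) (mono_poly (cauchy_coef f s) N z)) * exp (- Cmod z / INR n)
  <= 8 / 3 * M * (exp 1 / 4) ^ N.
Proof.
  intros Hz.
  assert (Hw : exp (- Cmod z / INR n) <= 1).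
  { rewrite <- exp_0. apply exp_le_mono. unfold Rdiv.
    assert (0 <= Cmod z * / INR n) by (apply Rmult_le_pos; [apply Cmod_ge_0| left; now apply Rinv_0_lt_compat]).
    lra. }
  assert (HK : K * (/ 4) ^ N = M * (exp 1 / 4) ^ N).
  { unfold K. rewrite <- (Rmult_1_r (INR N)), <- exp_pow, Rmult_assoc, <- Rpow_mult_distr. reflexivity. }
  assert (Hr := taylor_remainder_le f s K Hf Hs approx_boundary_le z N Hz).
  assert (0 <= M * (exp 1 / 4) ^ N) by (apply Rmult_le_pos; [lra| apply pow_le; generalize (exp_pos 1); lra]).
  rewrite <- Rmult_1_r. apply Rmult_le_compat; [apply Cmod_ge_0| left; apply exp_pos| |exact Hw].
  rewrite Rmult_assoc, HK in Hr. lra.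
Qed.

Lemma approx_outer_le z : s / 4 < Cmod z ->
  Cmod (Cminus (f z) (mono_poly (cauchy_coef f s) N z)) * exp (- Cmod z / INR n)
  <= 11 / 3 * M * exp (- INR N).
Proof.
  intros Hz. set (x := Cmod z) in *.
  unfold Cminus. eapply Rle_trans; [apply Rmult_le_compat_r; [left; apply exp_pos| apply Cmod_triangle]|].
  rewrite Cmod_opp, Rmult_plus_distr_r.
  assert (Hf_far : Cmod (f z) * exp (- x / INR n) <= M * exp (- INR N)).
  { eapply Rle_trans; [apply Rmult_le_compat_r; [left; apply exp_pos| apply HM]|].
    fold x. rewrite Rmult_assoc, <- exp_plus. apply Rmult_le_compat_l; auto. apply exp_le_mono.
    rewrite H16. unfold s in Hz. apply (Rmult_le_reg_r (16 * INR n)); [lra|].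
    replace ((x / (16 * INR n) + - x / INR n) * (16 * INR n)) with (- 15 * x) by (field; lra).
    generalize (pos_INR N). nra. }
  assert (Hpoly := mono_poly_cauchy_coef_le f s K Hf Hs approx_boundary_le z N (INR n) Hn0
    ltac:(unfold s; generalize (pos_INR N); nra) ltac:(fold x; lra)).
  replace (- (s / 4) / INR n) with (- INR N + - INR N) in Hpoly by (unfold s; field; lra).
  rewrite exp_plus in Hpoly. unfold K in Hpoly.
  assert (Hinv : exp (INR N) * exp (- INR N) = 1) by (rewrite <- exp_plus, Rplus_opp_r; apply exp_0).
  fold x in Hpoly.
  replace (8 / 3 * (M * exp (INR N)) * (exp (- INR N) * exp (- INR N)))
    with (8 / 3 * M * exp (- INR N) * (exp (INR N) * exp (- INR N))) in Hpoly by ring.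
  rewrite Hinv in Hpoly. lra.
Qed.

Lemma approx_error_le z :
  Cmod (Cminus (f z) (mono_poly (cauchy_coef f s) N z)) * exp (- Cmod z / INR n)
  <= 4 * M * (exp 1 / 4) ^ N.
Proof.
  assert (He : 2 <= exp 1) by (generalize (exp_ineq1_le 1); lra).
  assert (Hq : exp (- INR N) <= (exp 1 / 4) ^ N).
  { replace (- INR N) with (INR N * - 1) by ring. rewrite <- exp_pow.
    apply pow_incr. split; [left; apply exp_pos|].
    replace (exp (- 1)) with (/ exp 1) by (rewrite <- exp_Ropp; f_equal; ring).
    apply (Rmult_le_reg_r (exp 1)); [lra|]. rewrite Rinv_l by lra. nra. }
  assert (Hq0 : 0 <= M * (exp 1 / 4) ^ N) by (apply Rmult_le_pos; [lra| apply pow_le; lra]).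
  destruct (Rle_lt_dec (Cmod z) (s / 4)) as [Hz|Hz].
  - eapply Rle_trans; [now apply approx_inner_le|]. lra.
  - eapply Rle_trans; [now apply approx_outer_le|].
    assert (M * exp (- INR N) <= M * (exp 1 / 4) ^ N) by (apply Rmult_le_compat_l; auto). lra.
Qed.

End Approximation.

Lemma E1min_poly_approx f n eps : E1min f -> (1 <= n)%nat -> 0 < eps ->
  exists b N, forall z, Cmod (Cminus (f z) (mono_poly b N z)) * exp (- Cmod z / INR n) <= eps.
Proof.
  intros Hf Hn He.
  destruct (E1min_growth f (16 * n) Hf ltac:(lia)) as [M [HM0 HM]].
  assert (Hq : 0 < exp 1 / 4 < 1).
  { split; [apply Rdiv_lt_0_compat; [apply exp_pos| lra]|]. generalize exp_le_3. lra. }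
  destruct (pow_lt_1_zero (exp 1 / 4) ltac:(rewrite Rabs_pos_eq; lra) (eps / (4 * M + 1)))
    as [N0 HN0]; [apply Rdiv_lt_0_compat; lra|].
  specialize (HN0 (S N0) (le_S _ _ (le_n N0))). rewrite Rabs_pos_eq in HN0 by (apply pow_le; lra).
  exists (cauchy_coef f (8 * INR n * INR (S N0))), (S N0). intros z.
  eapply Rle_trans;
    [exact (approx_error_le f n (S N0) M (entire_is_cderive f (proj1 Hf)) Hn ltac:(lia) HM0 HM z)|].
  apply (Rmult_lt_compat_l (4 * M + 1)) in HN0; [|lra].
  replace ((4 * M + 1) * (eps / (4 * M + 1))) with eps in HN0 by (field; lra).
  assert (0 <= (exp 1 / 4) ^ S N0) by (apply pow_le; lra). nra.
Qed.

Lemma ex_derive_of_is_cderive f u l : is_cderive f u l ->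
  ex_derive (K := C_AbsRing) (V := C_NormedModule) f u.
Proof. intros [_ H]. exists l. split; [apply is_linear_scal_l| exact H]. Qed.

Lemma E1min_ext f g : (forall z, f z = g z) -> E1min f -> E1min g.
Proof.
  intros E [Hd Hb]. split.
  - intros z. apply (ex_derive_ext f g); auto.
  - intros n Hn. destruct (Hb n Hn) as [M HM]. exists M. intros z. rewrite <- E. apply HM.
Qed.

Lemma E1min_const c : E1min (fun _ => c).
Proof.
  split; [intros z; apply ex_derive_const|].
  intros n Hn. exists (Cmod c). intros z.
  assert (exp (- Cmod z / INR n) <= 1).
  { rewrite <- exp_0. apply exp_le_mono. unfold Rdiv.
    assert (0 <= Cmod z * / INR n); [|lra].
    apply Rmult_le_pos; [apply Cmod_ge_0| left; apply Rinv_0_lt_compat, lt_0_INR; lia]. }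
  generalize (Cmod_ge_0 c). nra.
Qed.

Lemma E1min_plus f g : E1min f -> E1min g -> E1min (fun w => Cplus (f w) (g w)).
Proof.
  intros [Hdf Hbf] [Hdg Hbg]. split.
  - intros z. apply (ex_derive_plus (K := C_AbsRing) (V := C_NormedModule) f g); auto.
  - intros n Hn. destruct (Hbf n Hn) as [M1 H1]. destruct (Hbg n Hn) as [M2 H2].
    exists (M1 + M2). intros z. specialize (H1 z). specialize (H2 z).
    assert (Hp := exp_pos (- Cmod z / INR n)).
    eapply Rle_trans; [apply Rmult_le_compat_r; [lra| apply Cmod_triangle]|]. lra.
Qed.

Lemma E1min_scal c f : E1min f -> E1min (fun w => Cmult c (f w)).
Proof.
  intros [Hd Hb]. split.
  - intros z. destruct (Hd z) as [l Hl].
    apply (ex_derive_of_is_cderive _ _ (Cplus (Cmult (RtoC 0) (f z)) (Cmult c l))).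
    apply is_cderive_mult; [apply is_cderive_const|]. split; [apply is_linear_scal_l| apply Hl].
  - intros n Hn. destruct (Hb n Hn) as [M HM]. exists (Cmod c * M). intros z.
    rewrite Cmod_mult, Rmult_assoc. apply Rmult_le_compat_l; [apply Cmod_ge_0| apply HM].
Qed.

Lemma mul_exp_neg_le (x n : R) : 0 < n -> x * exp (- x / n) <= n.
Proof.
  intros Hn. set (y := x / n).
  assert (Hy : y * exp (- y) <= 1).
  { rewrite <- exp_0, <- (Rplus_opp_r y), exp_plus.
    apply Rmult_le_compat_r; [left; apply exp_pos|]. generalize (exp_ineq1_le y). lra. }
  replace (x * exp (- x / n)) with (n * (y * exp (- y))) by (unfold y, Rdiv; rewrite Ropp_mult_distr_l; field; lra).
  nra.
Qed.

(* Splitting [exp (- |z| / n)] into two halves, one of which absorbs the factor [|z|]. *)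
Lemma E1min_mul_Z f : E1min f -> E1min (fun w => Cmult (f w) w).
Proof.
  intros [Hd Hb]. split.
  - intros z. destruct (Hd z) as [l Hl].
    apply (ex_derive_of_is_cderive _ _ (Cplus (Cmult l z) (Cmult (f z) (RtoC 1)))).
    apply is_cderive_mult; [split; [apply is_linear_scal_l| apply Hl]| apply is_cderive_id].
  - intros n Hn. destruct (Hb (2 * n)%nat ltac:(lia)) as [M HM].
    assert (Hn0 : 0 < 2 * INR n) by (assert (0 < INR n) by (apply lt_0_INR; lia); lra).
    exists (M * (2 * INR n)). intros z. specialize (HM z).
    rewrite mult_INR in HM. replace (INR 2) with 2 in HM by (simpl; ring).
    rewrite Cmod_mult.
    assert (Hxe := mul_exp_neg_le (Cmod z) _ Hn0).
    assert (E : exp (- Cmod z / INR n) = exp (- Cmod z / (2 * INR n)) * exp (- Cmod z / (2 * INR n)))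
      by (rewrite <- exp_plus; f_equal; field; lra).
    assert (Hf0 := Cmod_ge_0 (f z)). assert (Hz0 := Cmod_ge_0 z).
    assert (Hh := exp_pos (- Cmod z / (2 * INR n))).
    rewrite E. replace (Cmod (f z) * Cmod z * (exp (- Cmod z / (2 * INR n)) * exp (- Cmod z / (2 * INR n))))
      with ((Cmod (f z) * exp (- Cmod z / (2 * INR n))) * (Cmod z * exp (- Cmod z / (2 * INR n)))) by ring.
    apply Rmult_le_compat; [apply Rmult_le_pos; lra| apply Rmult_le_pos; lra| exact HM| exact Hxe].
Qed.

Lemma E1min_mono_poly b N : E1min (mono_poly b N).
Proof.
  assert (Hpow : forall k, E1min (fun z => Cpow z k)).
  { induction k as [|k IH].
    - exact (E1min_const (RtoC 1)).
    - exact (E1min_mul_Z (fun z => Cpow z k) IH). }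
  induction N as [|N IH].
  - exact (E1min_const (RtoC 0)).
  - exact (E1min_plus _ _ IH (E1min_scal (b N) _ (Hpow N))).
Qed.

(** * Continuous operators acting as weighted evaluations *)

Lemma E1min_continuous_eval_le T : E1min_continuous T ->
  exists m K, (1 <= m)%nat /\ 0 <= K /\
    forall g eps z, E1min g -> wbound m g eps -> Cmod (T g z) <= K * eps * exp (Cmod z).
Proof.
  intros Tcont. destruct (Tcont 1%nat (le_n 1)) as [m [K [Hm [HK Hcont]]]].
  exists m, K. repeat split; auto. intros g eps z Hg Hgb.
  assert (H := Hcont g Hg eps Hgb z). simpl INR in H. rewrite Rdiv_1_r in H.
  apply (Rmult_le_reg_r (exp (- Cmod z))); [apply exp_pos|].
  rewrite Rmult_assoc, <- exp_plus, Rplus_opp_r, exp_0, Rmult_1_r. exact H.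
Qed.

(* Compare with a polynomial approximation of [f] in the seminorm that controls [T] at
   level [1]. *)
Lemma E1min_operator_eval a s (T : (C -> C) -> (C -> C)) (c w z : C) f :
  E1min_linear T -> E1min_continuous T -> E1min f ->
  (forall co N, T (cpoly a s co N) z = Cmult c (cpoly a s co N w)) ->
  T f z = Cmult c (f w).
Proof.
  intros [_ [Tplus Tscal]] Tcont Hf HT.
  destruct (E1min_continuous_eval_le T Tcont) as [m [K [Hm [HK Hcont]]]].
  apply Ceq_minus, (C_eq_0_of_small _ (K * exp (Cmod z) + Cmod c * exp (Cmod w / INR m))).
  { assert (0 < exp (Cmod z)) by apply exp_pos. assert (0 < exp (Cmod w / INR m)) by apply exp_pos.
    generalize (Cmod_ge_0 c). nra. }
  intros eps He.
  destruct (E1min_poly_approx f m eps Hf Hm He) as [b [N Happrox]].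
  destruct (in_charlier_span_mono_poly a s b N) as [co Hco].
  set (P := cpoly a s co N).
  assert (HP : E1min P) by (apply (E1min_ext (mono_poly b N)); [exact Hco| apply E1min_mono_poly]).
  assert (HmP : E1min (fun u => Cmult (RtoC (-1)) (P u))) by (apply E1min_scal; exact HP).
  set (g := fun u => Cplus (f u) (Cmult (RtoC (-1)) (P u))).
  assert (Hg : E1min g) by (apply E1min_plus; assumption).
  assert (Hgb : wbound m g eps).
  { intros u. unfold g, P. rewrite <- Hco.
    replace (Cplus (f u) (Cmult (RtoC (-1)) (mono_poly b N u))) with (Cminus (f u) (mono_poly b N u)) by ring.
    apply Happrox. }
  assert (HTg := Hcont g eps z Hg Hgb).
  assert (HPw : Cmod (Cminus (f w) (P w)) <= eps * exp (Cmod w / INR m)).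
  { assert (H := Happrox w). unfold P. rewrite <- Hco.
    apply (Rmult_le_reg_r (exp (- Cmod w / INR m))); [apply exp_pos|].
    rewrite Rmult_assoc, <- exp_plus.
    replace (Cmod w / INR m + - Cmod w / INR m) with 0 by (unfold Rdiv; ring).
    rewrite exp_0, Rmult_1_r. exact H. }
  unfold g in HTg. rewrite (Tplus f _ Hf HmP), (Tscal _ P HP) in HTg.
  unfold P in HTg. rewrite HT in HTg. fold P in HTg.
  replace (Cminus (T f z) (Cmult c (f w))) with
    (Cminus (Cplus (T f z) (Cmult (RtoC (-1)) (Cmult c (P w)))) (Cmult c (Cminus (f w) (P w)))) by ring.
  unfold Cminus at 1. eapply Rle_trans; [apply Cmod_triangle|].
  rewrite Cmod_opp, Cmod_mult.
  assert (0 <= Cmod c) by apply Cmod_ge_0.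
  assert (Cmod c * Cmod (Cminus (f w) (P w)) <= Cmod c * (eps * exp (Cmod w / INR m)))
    by (apply Rmult_le_compat_l; auto).
  nra.
Qed.

Theorem proposition5p2 :
  forall (alpha sigma : R), 0 < alpha -> 0 < sigma ->
  forall (U V : (C -> C) -> (C -> C)),
    E1min_linear U -> E1min_continuous U ->
    E1min_linear V -> E1min_continuous V ->
    (forall (co : nat -> C) (N : nat) (z : C),
        U (cpoly alpha sigma co N) z = U_poly alpha sigma co N z) ->
    (forall (co : nat -> C) (N : nat) (z : C),
        V (cpoly alpha sigma co N) z = V_poly alpha sigma co N z) ->
    forall f : C -> C, E1min f ->
      forall z : C,
        U f z = Cmult z (f (Cminus z (RtoC alpha))) /\
        V f z = f (Cplus z (RtoC alpha)).
Proof.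
  (* The Charlier recurrences are polynomial identities: no positivity is needed. *)
  intros alpha sigma _ _ U V UL UC VL VC HU HV f Hf z. split.
  - apply (E1min_operator_eval alpha sigma); auto.
    intros co N. now rewrite HU, U_poly_shift.
  - rewrite <- (Cmult_1_l (f _)). apply (E1min_operator_eval alpha sigma); auto.
    intros co N. now rewrite HV, V_poly_translate, Cmult_1_l.
Qed.
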